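(* For every $\varphi\in L^2(\mathbb{T})$ with $\hat\varphi(0)=0$ and all $s,t$, we have $\langle\varphi,X_{ts}(\varphi,\varphi)\rangle=0$ and $$2\langle\varphi,X^2_{ts}(\varphi,\varphi,\varphi)\rangle+\langle X_{ts}(\varphi,\varphi),X_{ts}(\varphi,\varphi)\rangle=0,$$ where $\langle\cdot,\cdot\rangle$ is the $L^2(\mathbb{T})$ scalar product.
   Context: For a distribution $f$ on $\mathbb{T}=[-\pi,\pi]$ write $f(\xi)=\sum_k\hat f(k)e^{ik\xi}$. $\dot X_\sigma$ is the bilinear operator $\dot X_\sigma(\varphi_1,\varphi_2)=\frac12U(-\sigma)\partial_\xi[(U(\sigma)\varphi_1)(U(\sigma)\varphi_2)]$ with $\widehat{U(t)\varphi}(k)=e^{ik^3t}\hat\varphi(k)$; equivalently $\widehat{\dot X_\sigma(\varphi_1,\varphi_2)}(k)=\frac{ik}{2}\sum_{k_1\ne0,k}e^{-3ikk_1k_2\sigma}\hat\varphi_1(k_1)\hat\varphi_2(k_2)$, $k_2=k-k_1$. $X_{ts}=\int_s^t\dot X_\sigma d\sigma$ (so $\widehat{X_{ts}(\varphi_1,\varphi_2)}(k)=\sum_{k_1\ne0,k}\frac{e^{-3ikk_1k_2s}-e^{-3ikk_1k_2t}}{6k_1k_2}\hat\varphi_1(k_1)\hat\varphi_2(k_2)$) and $X^2_{ts}(\varphi_1,\varphi_2,\varphi_3)=2\int_s^td\sigma\int_s^\sigma d\sigma_1\dot X_\sigma(\varphi_1,\dot X_{\sigma_1}(\varphi_2,\varphi_3))$,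 defined on trigonometric polynomials and extended by continuity (they are bounded on mean-zero $L^2$). *)

From Stdlib Require Import Reals ZArith Lra.
From Coquelicot Require Import Coquelicot.

Open Scope R_scope.

(** A (mean-zero) element of L^2(T), T = [-pi,pi], is represented by its
    Fourier coefficients  k |-> hat f(k),  with f(xi) = sum_k hat f(k) e^{ik xi}. *)
Definition fcoef := Z -> C.

Definition cis (th : R) : C := (cos th, sin th).

(** Real sum over Z, computed as f 0 + sum_{n>=1} (f n + f (-n)); used only
    for absolutely convergent or finitely supported families. *)
Definition sumZR (f : Z -> R) : R :=
  f 0%Z + Series (fun n : nat => f (Z.of_nat (S n)) + f (- Z.of_nat (S n))%Z).

Definition summableZR (f : Z -> R) : Prop :=
  ex_series (fun n : nat => f (Z.of_nat (S n)) + f (- Z.of_nat (S n))%Z).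

Definition sumZ (f : Z -> C) : C :=
  (sumZR (fun k => fst (f k)), sumZR (fun k => snd (f k))).

Definition in_l2 (f : fcoef) : Prop :=
  summableZR (fun k => (Cmod (f k)) ^ 2).

Definition real_L2_0 (f : fcoef) : Prop :=
  in_l2 f /\ f 0%Z = RtoC 0 /\ (forall k, f (- k)%Z = Cconj (f k)).

(** L^2(T) scalar product: <f,g> = int_T f(xi) conj(g(xi)) dxi
    = 2 pi sum_k hat f(k) conj(hat g(k)) (Parseval). *)
Definition l2inner (f g : fcoef) : C :=
  Cmult (RtoC (2 * PI)) (sumZ (fun k => Cmult (f k) (Cconj (g k)))).

Definition l2norm2 (f : fcoef) : R := sumZR (fun k => (Cmod (f k)) ^ 2).

Definition L2_converges (u : nat -> fcoef) (Y : fcoef) : Prop :=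
  (forall N, in_l2 (fun k => Cminus (u N k) (Y k))) /\
  is_lim_seq (fun N => l2norm2 (fun k => Cminus (u N k) (Y k))) 0.

Definition trunc (N : nat) (f : fcoef) : fcoef :=
  fun k => if (Z.abs k <=? Z.of_nat N)%Z then f k else RtoC 0.

Definition Xdot (sigma : R) (phi1 phi2 : fcoef) : fcoef :=
  fun k =>
    Cmult (Cmult (0, 1) (RtoC (IZR k / 2)))
      (sumZ (fun k1 =>
         if (orb (Z.eqb k1 0) (Z.eqb k1 k)) then RtoC 0 else
         let k2 := (k - k1)%Z in
         Cmult (cis (- 3 * IZR k * IZR k1 * IZR k2 * sigma))
               (Cmult (phi1 k1) (phi2 k2)))).

Definition Xts (t s : R) (phi1 phi2 : fcoef) : fcoef :=
  fun k =>
    sumZ (fun k1 =>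
      if (orb (Z.eqb k1 0) (Z.eqb k1 k)) then RtoC 0 else
      let k2 := (k - k1)%Z in
      Cmult (Cdiv (Cminus (cis (- 3 * IZR k * IZR k1 * IZR k2 * s))
                          (cis (- 3 * IZR k * IZR k1 * IZR k2 * t)))
                  (RtoC (6 * IZR k1 * IZR k2)))
            (Cmult (phi1 k1) (phi2 k2))).

(** X^2_ts(phi1,phi2,phi3) = 2 int_s^t dsigma int_s^sigma dsigma1
      Xdot_sigma(phi1, Xdot_sigma1(phi2,phi3)),
    computed Fourier-coefficientwise; this is the defining formula on
    trigonometric polynomials. *)
Definition X2ts_trig (t s : R) (phi1 phi2 phi3 : fcoef) : fcoef :=
  fun k =>
    Cmult (RtoC 2)
      (RInt (V := C_R_CompleteNormedModule)
        (fun sigma =>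
           RInt (V := C_R_CompleteNormedModule)
             (fun sigma1 => Xdot sigma phi1 (Xdot sigma1 phi2 phi3) k)
             s sigma)
        s t).

(* Both identities are first proved for trigonometric polynomials [p] (finitely many
   modes, [p_0 = 0], real-valued), where all sums are finite.

   [<p, X_ts(p,p)>] is a sum over [k1 + k2 + k3 = 0] of a symmetric expression times
   [1/(k2 k3)]; symmetrising replaces this weight by a third of
   [1/(k2 k3) + 1/(k1 k3) + 1/(k1 k2) = (k1 + k2 + k3)/(k1 k2 k3) = 0].

   The same symmetrisation shows [2 <p, Xdot_sg(p,q)> + <Xdot_sg(p,p), q> = 0] for real
   [q] with [q_0 = 0], and that [<p, Xdot_sg(p,q)>] is real. Since
   [d/dsg X_{sg s}(p,p) = Xdot_sg(p,p)], taking [q = X_{sg s}(p,p)] gives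
   [d/dsg |X_{sg s}|^2 = -4 <p, Xdot_sg(p, X_{sg s}(p,p))>]. The inner integral in [X^2_ts]
   is [Xdot_sg(p, X_{sg s}(p,p))], so integrating over [sg] from [s] to [t] yields
   [2 <p, X^2_ts(p,p,p)> = -|X_ts|^2].

   For [phi] in [L^2], apply this to the Fourier truncations of [phi]. The coefficients of
   [X_ts] at any truncation are dominated by the convolution square of [|phi_k| / |k|],
   which is summable, so dominated convergence passes both identities to the limit; the
   term [<phi_N, X^2_ts(phi_N, phi_N, phi_N)>] converges to [<phi, Y>] because the
   truncated [X^2_ts] converge to [Y] in [L^2]. *)

From Stdlib Require Import Reals ZArith Lra Lia ClassicalEpsilon.
From Coquelicot Require Import Coquelicot.
Open Scope R_scope.

(** * Finite sums over integer intervals *)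

Fixpoint zsum (lo : Z) (n : nat) (g : Z -> R) : R :=
  match n with O => 0 | S n' => g lo + zsum (lo + 1) n' g end.

Lemma zsum_ext lo n f g :
  (forall k, (lo <= k < lo + Z.of_nat n)%Z -> f k = g k) -> zsum lo n f = zsum lo n g.
Proof.
  revert lo; induction n as [|n IH]; intros lo H; simpl; auto.
  rewrite H by lia. rewrite (IH (lo + 1)%Z); auto. intros; apply H; lia.
Qed.

Lemma zsum_1 lo g : zsum lo 1 g = g lo.
Proof. simpl. ring. Qed.

Lemma zsum_app lo n m g : zsum lo (n + m) g = zsum lo n g + zsum (lo + Z.of_nat n) m g.
Proof.
  revert lo; induction n as [|n IH]; intros lo; simpl.
  - rewrite Z.add_0_r. ring.
  - rewrite IH. replace (lo + 1 + Z.of_nat n)%Z with (lo + Z.pos (Pos.of_succ_nat n))%Z by lia.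
    ring.
Qed.

Lemma zsum_eq0 lo n g : (forall k, (lo <= k < lo + Z.of_nat n)%Z -> g k = 0) -> zsum lo n g = 0.
Proof.
  revert lo; induction n as [|n IH]; intros lo H; simpl; auto.
  rewrite H by lia. rewrite IH; [ring|]. intros; apply H; lia.
Qed.

Lemma zsum_plus lo n f g : zsum lo n (fun k => f k + g k) = zsum lo n f + zsum lo n g.
Proof. revert lo; induction n as [|n IH]; intros; simpl; [|rewrite IH]; ring. Qed.

Lemma zsum_scal lo n c f : zsum lo n (fun k => c * f k) = c * zsum lo n f.
Proof. revert lo; induction n as [|n IH]; intros; simpl; [|rewrite IH]; ring. Qed.

Lemma zsum_opp lo n f : zsum lo n (fun k => - f k) = - zsum lo n f.
Proof. revert lo; induction n as [|n IH]; intros; simpl; [|rewrite IH]; ring. Qed.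

Lemma zsum_minus lo n f g : zsum lo n (fun k => f k - g k) = zsum lo n f - zsum lo n g.
Proof. revert lo; induction n as [|n IH]; intros; simpl; [|rewrite IH]; ring. Qed.

Lemma zsum_le lo n f g :
  (forall k, (lo <= k < lo + Z.of_nat n)%Z -> f k <= g k) -> zsum lo n f <= zsum lo n g.
Proof.
  revert lo; induction n as [|n IH]; intros lo H; simpl; [lra|].
  apply Rplus_le_compat; [apply H; lia|apply IH; intros; apply H; lia].
Qed.

Lemma zsum_ge0 lo n f : (forall k, 0 <= f k) -> 0 <= zsum lo n f.
Proof.
  intros H. rewrite <- (zsum_eq0 lo n (fun _ => 0)) by auto. apply zsum_le; auto.
Qed.

Lemma zsum_split3 lo n lo' n' g : (lo' <= lo)%Z -> (lo + Z.of_nat n <= lo' + Z.of_nat n')%Z ->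
  zsum lo' n' g = zsum lo' (Z.to_nat (lo - lo')) g + zsum lo n g
                  + zsum (lo + Z.of_nat n) (Z.to_nat (lo' + Z.of_nat n' - lo - Z.of_nat n)) g.
Proof.
  intros H1 H2.
  replace n' with (Z.to_nat (lo - lo') + (n + Z.to_nat (lo' + Z.of_nat n' - lo - Z.of_nat n)))%nat
    at 1 by lia.
  rewrite !zsum_app. replace (lo' + Z.of_nat (Z.to_nat (lo - lo')))%Z with lo by lia. ring.
Qed.

Lemma zsum_widen lo n lo' n' g : (lo' <= lo)%Z -> (lo + Z.of_nat n <= lo' + Z.of_nat n')%Z ->
  (forall k, (lo' <= k < lo' + Z.of_nat n')%Z -> ~ (lo <= k < lo + Z.of_nat n)%Z -> g k = 0) ->
  zsum lo' n' g = zsum lo n g.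
Proof.
  intros H1 H2 H. rewrite (zsum_split3 lo n lo' n') by auto.
  rewrite (zsum_eq0 lo' _ g), (zsum_eq0 (lo + Z.of_nat n) _ g); try ring;
    intros k Hk; apply H; lia.
Qed.

Lemma zsum_le_widen lo n lo' n' g : (forall k, 0 <= g k) ->
  (lo' <= lo)%Z -> (lo + Z.of_nat n <= lo' + Z.of_nat n')%Z -> zsum lo n g <= zsum lo' n' g.
Proof.
  intros Hg H1 H2. rewrite (zsum_split3 lo n lo' n') by auto.
  pose proof (zsum_ge0 lo' (Z.to_nat (lo - lo')) g Hg).
  pose proof (zsum_ge0 (lo + Z.of_nat n) (Z.to_nat (lo' + Z.of_nat n' - lo - Z.of_nat n)) g Hg).
  lra.
Qed.

Lemma zsum_shift lo n c g : zsum lo n (fun k => g (c + k)%Z) = zsum (c + lo) n g.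
Proof.
  revert lo; induction n as [|n IH]; intros; simpl; auto.
  rewrite IH. do 2 f_equal; lia.
Qed.

Lemma zsum_reflect lo n c g :
  zsum lo n (fun k => g (c - k)%Z) = zsum (c - lo - Z.of_nat n + 1) n g.
Proof.
  revert lo; induction n as [|n IH]; intros; [reflexivity|].
  simpl zsum at 1. rewrite IH, <- Nat.add_1_r, zsum_app. simpl.
  replace (c - (lo + 1) - Z.of_nat n + 1)%Z with (c - lo - Z.of_nat (n + 1) + 1)%Z by lia.
  replace (c - lo - Z.of_nat (n + 1) + 1 + Z.of_nat n)%Z with (c - lo)%Z by lia. ring.
Qed.

Lemma zsum_swap lo1 n1 lo2 n2 (f : Z -> Z -> R) :
  zsum lo1 n1 (fun x => zsum lo2 n2 (fun y => f x y))
  = zsum lo2 n2 (fun y => zsum lo1 n1 (fun x => f x y)).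
Proof.
  revert lo1; induction n1 as [|n1 IH]; intros; simpl.
  - rewrite zsum_eq0; auto.
  - rewrite IH, <- zsum_plus. auto.
Qed.

Lemma zsum_single_le lo n g j : (forall k, 0 <= g k) -> (lo <= j < lo + Z.of_nat n)%Z ->
  g j <= zsum lo n g.
Proof.
  intros Hg Hj. rewrite <- zsum_1. apply zsum_le_widen; auto; lia.
Qed.

Lemma zsum_cvg lo n (u : nat -> Z -> R) (l : Z -> R) :
  (forall k, is_lim_seq (fun N => u N k) (l k)) ->
  is_lim_seq (fun N => zsum lo n (u N)) (zsum lo n l).
Proof.
  revert lo; induction n as [|n IH]; intros lo H; simpl.
  - apply is_lim_seq_const.
  - apply (is_lim_seq_plus' _ _ (l lo) (zsum (lo + 1) n l)); auto.
Qed.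

(** * Sums over Z *)

Definition boxsum (M : nat) (g : Z -> R) : R := zsum (- Z.of_nat M) (2 * M + 1) g.

Definition sumZR_term (g : Z -> R) (n : nat) : R :=
  g (Z.of_nat (S n)) + g (- Z.of_nat (S n))%Z.

Definition vanishes_beyond (M : nat) (g : Z -> R) : Prop :=
  forall k, (Z.of_nat M < Z.abs k)%Z -> g k = 0.

Lemma sumZR_unfold g : sumZR g = g 0%Z + Series (sumZR_term g).
Proof. reflexivity. Qed.

Lemma boxsum_0 g : boxsum 0 g = g 0%Z.
Proof. unfold boxsum; simpl. ring. Qed.

Lemma boxsum_S M g : boxsum (S M) g = boxsum M g + sumZR_term g M.
Proof.
  unfold boxsum, sumZR_term.
  replace (2 * S M + 1)%nat with (1 + ((2 * M + 1) + 1))%nat by lia.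
  rewrite !zsum_app, !zsum_1.
  replace (- Z.of_nat (S M) + Z.of_nat 1)%Z with (- Z.of_nat M)%Z by lia.
  replace (- Z.of_nat M + Z.of_nat (2 * M + 1))%Z with (Z.of_nat (S M)) by lia.
  ring.
Qed.

Lemma boxsum_S_sum_n M g : boxsum (S M) g = g 0%Z + sum_n (sumZR_term g) M.
Proof.
  induction M as [|M IH].
  - rewrite boxsum_S, boxsum_0, sum_O. auto.
  - rewrite boxsum_S, IH, sum_Sn. unfold plus; simpl. ring.
Qed.

Lemma boxsum_widen M M' g : (M <= M')%nat -> vanishes_beyond M g -> boxsum M' g = boxsum M g.
Proof.
  intros HM Hg. apply zsum_widen; try lia. intros k H1 H2. apply Hg. lia.
Qed.

Lemma boxsum_le_S M g : (forall k, 0 <= g k) -> boxsum M g <= boxsum (S M) g.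
Proof.
  intros Hg. rewrite boxsum_S. unfold sumZR_term.
  pose proof (Hg (Z.of_nat (S M))); pose proof (Hg (- Z.of_nat (S M))%Z). lra.
Qed.

Lemma sumZR_box_cvg g : summableZR g -> is_lim_seq (fun M => boxsum M g) (sumZR g).
Proof.
  intros Hg. apply Series_correct in Hg.
  apply (is_lim_seq_incr_n _ 1).
  apply is_lim_seq_ext with (u := fun n => g 0%Z + sum_n (sumZR_term g) n).
  - intros n. rewrite Nat.add_1_r, boxsum_S_sum_n. auto.
  - apply (is_lim_seq_plus' _ _ (g 0%Z) (Series (sumZR_term g))); auto.
    apply is_lim_seq_const.
Qed.

Lemma is_series_of_sum_n_cvg (a : nat -> R) (l : R) : is_lim_seq (sum_n a) l -> is_series a l.
Proof. intros H; exact H. Qed.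

Lemma summableZR_finite M g : vanishes_beyond M g -> summableZR g.
Proof.
  intros Hg. exists (boxsum M g - g 0%Z). apply is_series_of_sum_n_cvg.
  apply is_lim_seq_ext_loc with (u := fun _ => boxsum M g - g 0%Z); [|apply is_lim_seq_const].
  exists M. intros n Hn.
  rewrite <- (boxsum_widen M (S n) g), boxsum_S_sum_n by (auto; lia).
  rewrite Rplus_comm, Rplus_minus_r. reflexivity.
Qed.

Lemma sumZR_finite M g : vanishes_beyond M g -> sumZR g = boxsum M g.
Proof.
  intros Hg.
  assert (Hc : is_lim_seq (fun M' => boxsum M' g) (boxsum M g)).
  { apply is_lim_seq_ext_loc with (u := fun _ => boxsum M g); [|apply is_lim_seq_const].
    exists M. intros; symmetry; apply boxsum_widen; auto. }
  apply is_lim_seq_unique in Hc.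
  rewrite (is_lim_seq_unique _ _ (sumZR_box_cvg g (summableZR_finite M g Hg))) in Hc.
  injection Hc; auto.
Qed.

Lemma summableZR_plus f g : summableZR f -> summableZR g -> summableZR (fun k => f k + g k).
Proof.
  intros Hf Hg. eapply ex_series_ext; [|apply (ex_series_plus _ _ Hf Hg)].
  intros n; unfold sumZR_term, plus; simpl; ring.
Qed.

Lemma sumZR_plus f g : summableZR f -> summableZR g ->
  sumZR (fun k => f k + g k) = sumZR f + sumZR g.
Proof.
  intros Hf Hg. rewrite !sumZR_unfold.
  rewrite (Series_ext _ (fun n => sumZR_term f n + sumZR_term g n)), Series_plus; auto.
  - ring.
  - intros n; unfold sumZR_term; ring.
Qed.

Lemma summableZR_scal c f : summableZR f -> summableZR (fun k => c * f k).
Proof.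
  intros Hf. eapply ex_series_ext; [|apply (ex_series_scal_l c _ Hf)].
  intros n; unfold sumZR_term, scal; simpl; unfold mult; simpl; ring.
Qed.

Lemma sumZR_scal c f : sumZR (fun k => c * f k) = c * sumZR f.
Proof.
  rewrite !sumZR_unfold, (Series_ext _ (fun n => c * sumZR_term f n)), Series_scal_l.
  - ring.
  - intros n; unfold sumZR_term; ring.
Qed.

Lemma sumZR_minus f g : summableZR f -> summableZR g ->
  sumZR (fun k => f k - g k) = sumZR f - sumZR g.
Proof.
  intros Hf Hg. rewrite !sumZR_unfold.
  rewrite (Series_ext _ (fun n => sumZR_term f n - sumZR_term g n)), Series_minus; auto.
  - ring.
  - intros n; unfold sumZR_term; ring.
Qed.

Lemma sumZR_term_abs_le f g n : (forall k, Rabs (f k) <= g k) ->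
  Rabs (sumZR_term f n) <= sumZR_term g n.
Proof.
  intros H. unfold sumZR_term. eapply Rle_trans; [apply Rabs_triang|].
  apply Rplus_le_compat; apply H.
Qed.

Lemma ex_series_abs_sumZR_term f g : (forall k, Rabs (f k) <= g k) -> summableZR g ->
  ex_series (fun n => Rabs (sumZR_term f n)).
Proof.
  intros H Hg. apply (@ex_series_le R_AbsRing R_CompleteNormedModule _ (sumZR_term g)); auto.
  intros n. unfold norm; simpl; unfold abs; simpl.
  rewrite Rabs_Rabsolu. apply sumZR_term_abs_le; auto.
Qed.

Lemma summableZR_le f g : (forall k, Rabs (f k) <= g k) -> summableZR g -> summableZR f.
Proof. intros H Hg. apply ex_series_Rabs, (ex_series_abs_sumZR_term f g); auto. Qed.

Lemma sumZR_abs_le f g : (forall k, Rabs (f k) <= g k) -> summableZR g ->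
  Rabs (sumZR f) <= sumZR g.
Proof.
  intros H Hg. rewrite !sumZR_unfold. eapply Rle_trans; [apply Rabs_triang|].
  apply Rplus_le_compat; auto.
  eapply Rle_trans; [apply Series_Rabs, (ex_series_abs_sumZR_term f g); auto|].
  apply Series_le; auto. intros n; split; [apply Rabs_pos|apply sumZR_term_abs_le; auto].
Qed.

Lemma sumZR_bounded_boxes g C : (forall k, 0 <= g k) -> (forall M, boxsum M g <= C) ->
  summableZR g /\ sumZR g <= C.
Proof.
  intros Hg HC.
  assert (Hinc : forall n, sum_n (sumZR_term g) n <= sum_n (sumZR_term g) (S n)).
  { intros n. pose proof (boxsum_le_S (S n) g Hg) as H. rewrite !boxsum_S_sum_n in H. lra. }
  assert (Hbd : forall n, sum_n (sumZR_term g) n <= C - g 0%Z).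
  { intros n. pose proof (HC (S n)) as H. rewrite boxsum_S_sum_n in H. lra. }
  destruct (ex_finite_lim_seq_incr _ _ Hinc Hbd) as [l Hl].
  assert (Hle : Rbar_le l (C - g 0%Z)).
  { apply (is_lim_seq_le (sum_n (sumZR_term g)) (fun _ => C - g 0%Z)); auto.
    apply is_lim_seq_const. }
  apply is_series_of_sum_n_cvg in Hl. simpl in Hle.
  split; [exists l; auto|]. rewrite sumZR_unfold, (is_series_unique _ l); auto. lra.
Qed.

Lemma boxsum_le_sumZR g M : (forall k, 0 <= g k) -> summableZR g -> boxsum M g <= sumZR g.
Proof.
  intros Hg Hs. apply (is_lim_seq_incr_compare (fun M => boxsum M g)).
  - apply sumZR_box_cvg; auto.
  - intros; apply boxsum_le_S; auto.
Qed.

Lemma sumZR_ge0 g : (forall k, 0 <= g k) -> summableZR g -> 0 <= sumZR g.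
Proof.
  intros Hg Hs. apply (Rle_trans _ (g 0%Z)); [apply Hg|].
  rewrite <- boxsum_0. apply boxsum_le_sumZR; auto.
Qed.

Lemma single_le_sumZR g j : (forall k, 0 <= g k) -> summableZR g -> g j <= sumZR g.
Proof.
  intros Hg Hs. apply (Rle_trans _ (boxsum (Z.to_nat (Z.abs j)) g)).
  - apply zsum_single_le; auto. lia.
  - apply boxsum_le_sumZR; auto.
Qed.

Lemma shifted_box_le_sumZR g j M : (forall k, 0 <= g k) -> summableZR g ->
  zsum (- Z.of_nat M) (2 * M + 1) (fun k => g (k - j)%Z) <= sumZR g.
Proof.
  intros Hg Hs.
  rewrite (zsum_ext _ _ _ (fun k => g (- j + k)%Z)) by (intros; f_equal; lia).
  rewrite zsum_shift. apply (Rle_trans _ (boxsum (M + Z.to_nat (Z.abs j)) g)).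
  - apply zsum_le_widen; auto; lia.
  - apply boxsum_le_sumZR; auto.
Qed.

Lemma zsum_sumZR lo n (f : Z -> Z -> R) : (forall k, summableZR (f k)) ->
  summableZR (fun j => zsum lo n (fun k => f k j)) /\
  zsum lo n (fun k => sumZR (f k)) = sumZR (fun j => zsum lo n (fun k => f k j)).
Proof.
  revert lo; induction n as [|n IH]; intros lo H; simpl.
  - assert (H0 : vanishes_beyond 0 (fun _ => 0)) by (intros ? ?; auto).
    rewrite (sumZR_finite 0 _ H0), boxsum_0.
    split; [apply (summableZR_finite 0); auto|auto].
  - destruct (IH (lo + 1)%Z H) as [S E].
    split; [apply summableZR_plus; auto|].
    rewrite sumZR_plus, E; auto.
Qed.

Lemma sumZR_tail_le d g : (forall k, Rabs (d k) <= g k) -> summableZR g ->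
  forall M, Rabs (sumZR d - boxsum M d) <= sumZR g - boxsum M g.
Proof.
  intros H Hg M.
  assert (Hd : summableZR d) by (apply (summableZR_le d g); auto).
  assert (Hj : forall j, Rabs (boxsum (j + M) d - boxsum M d) <= boxsum (j + M) g - boxsum M g).
  { induction j as [|j IH]; simpl.
    - rewrite Rminus_diag, Rabs_R0. lra.
    - rewrite !boxsum_S. pose proof (sumZR_term_abs_le d g (j + M) H).
      replace (boxsum (j + M) d + sumZR_term d (j + M) - boxsum M d)
        with ((boxsum (j + M) d - boxsum M d) + sumZR_term d (j + M)) by ring.
      eapply Rle_trans; [apply Rabs_triang|]. lra. }
  assert (Lim : forall h, summableZR h ->
            is_lim_seq (fun j => boxsum (j + M) h - boxsum M h) (sumZR h - boxsum M h)).
  { intros h Hh. apply (is_lim_seq_minus' _ _ (sumZR h) (boxsum M h)); [|apply is_lim_seq_const].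
    apply (is_lim_seq_incr_n (fun j => boxsum j h) M). apply sumZR_box_cvg; auto. }
  refine (is_lim_seq_le _ _ (Rabs (sumZR d - boxsum M d)) (sumZR g - boxsum M g) Hj _ _).
  - apply (is_lim_seq_abs _ (sumZR d - boxsum M d)), Lim; auto.
  - apply Lim; auto.
Qed.

Lemma is_lim_seq_abs_le (v : nat -> R) (l b : R) :
  (forall N, Rabs (v N) <= b) -> is_lim_seq v l -> Rabs l <= b.
Proof.
  intros Hb Hl.
  apply (is_lim_seq_le (fun N => Rabs (v N)) (fun _ => b) (Rabs l) b Hb).
  - apply (is_lim_seq_abs _ l Hl).
  - apply is_lim_seq_const.
Qed.

Lemma sumZR_dominated_cvg (u : nat -> Z -> R) (f g : Z -> R) :
  (forall k, is_lim_seq (fun N => u N k) (f k)) ->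
  (forall N k, Rabs (u N k) <= g k) -> summableZR g ->
  is_lim_seq (fun N => sumZR (u N)) (sumZR f).
Proof.
  intros Hl Hb Hg.
  assert (Hf : forall k, Rabs (f k) <= g k)
    by (intros k; apply (is_lim_seq_abs_le (fun N => u N k)); auto).
  assert (Hg0 : forall k, 0 <= 2 * g k)
    by (intros k; pose proof (Hf k); pose proof (Rabs_pos (f k)); lra).
  assert (H2g : summableZR (fun k => 2 * g k)) by (apply summableZR_scal; auto).
  assert (Hd : forall N k, Rabs (u N k - f k) <= 2 * g k).
  { intros. eapply Rle_trans; [apply Rabs_triang|]. rewrite Rabs_Ropp.
    pose proof (Hb N k); pose proof (Hf k); lra. }
  apply is_lim_seq_spec. intros eps.
  assert (he : 0 < eps / 2) by (destruct eps; simpl; lra).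
  destruct (proj2 (is_lim_seq_spec _ _) (sumZR_box_cvg _ H2g) (mkposreal _ he)) as [M HM].
  specialize (HM M (le_n M)). simpl in HM.
  assert (Hbox : is_lim_seq (fun N => boxsum M (fun k => u N k - f k)) 0).
  { unfold boxsum. rewrite <- (zsum_eq0 (- Z.of_nat M) (2 * M + 1) (fun _ => 0)) by auto.
    apply zsum_cvg. intros k. rewrite <- (Rminus_diag (f k)).
    apply (is_lim_seq_minus' _ _ (f k) (f k)); auto. apply is_lim_seq_const. }
  destruct (proj2 (is_lim_seq_spec _ _) Hbox (mkposreal _ he)) as [N0 HN0].
  exists N0. intros N HN. specialize (HN0 N HN). simpl in HN0. rewrite Rminus_0_r in HN0.
  assert (Hu : summableZR (u N)) by (apply (summableZR_le _ g); auto).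
  assert (Hff : summableZR f) by (apply (summableZR_le f g); auto).
  rewrite <- sumZR_minus by auto.
  pose proof (sumZR_tail_le (fun k => u N k - f k) (fun k => 2 * g k) (Hd N) H2g M) as Ht.
  pose proof (boxsum_le_sumZR (fun k => 2 * g k) M Hg0 H2g).
  rewrite Rabs_minus_sym, Rabs_right in HM by lra.
  replace (sumZR (fun k => u N k - f k)) with
    ((sumZR (fun k => u N k - f k) - boxsum M (fun k => u N k - f k))
     + boxsum M (fun k => u N k - f k)) by ring.
  eapply Rle_lt_trans; [apply Rabs_triang|]. lra.
Qed.

(** * Complex sums and limits *)

Ltac C_by_components := apply injective_projections; simpl; try ring.

Lemma Cdiv_RtoC w r : Cdiv w (RtoC r) = Cmult w (RtoC (/ r)).
Proof.
  destruct (Req_dec r 0) as [->|Hr].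
  - unfold Cdiv, Cinv; simpl. replace (0 ^ 2 + 0 ^ 2) with 0 by ring.
    unfold Rdiv. rewrite Rinv_0. C_by_components.
  - unfold Cdiv, Cinv; simpl. C_by_components; field; auto.
Qed.

Lemma cis_conj a : Cconj (cis a) = cis (- a).
Proof. unfold cis, Cconj; simpl. rewrite cos_neg, sin_neg. auto. Qed.

Lemma Cmod_cis a : Cmod (cis a) = 1.
Proof.
  unfold Cmod, cis; cbn [fst snd]. rewrite <- sqrt_1. f_equal.
  pose proof (sin2_cos2 a) as H. unfold Rsqr in H. lra.
Qed.

Lemma Cmod_cis_sub_le a b : Cmod (Cminus (cis a) (cis b)) <= 2.
Proof.
  unfold Cminus. eapply Rle_trans; [apply Cmod_triangle|]. rewrite Cmod_opp, !Cmod_cis. lra.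
Qed.

Lemma Rabs_im_le_Cmod z : Rabs (snd z) <= Cmod z.
Proof. pose proof (Rmax_Cmod z). pose proof (Rmax_r (Rabs (fst z)) (Rabs (snd z))). lra. Qed.

Lemma Cmod_le_abs_re_im z : Cmod z <= Rabs (fst z) + Rabs (snd z).
Proof.
  pose proof (Rabs_pos (fst z)); pose proof (Rabs_pos (snd z)).
  unfold Cmod. rewrite <- (sqrt_Rsqr (Rabs (fst z) + Rabs (snd z))) by lra.
  apply sqrt_le_1_alt. unfold Rsqr. rewrite <- (pow2_abs (fst z)), <- (pow2_abs (snd z)). nra.
Qed.

Definition zsumC (lo : Z) (n : nat) (h : Z -> C) : C :=
  (zsum lo n (fun k => fst (h k)), zsum lo n (fun k => snd (h k))).

Notation boxsumC M h := (zsumC (- Z.of_nat M) (2 * M + 1)%nat h).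

Definition vanishes_beyondC (M : nat) (h : Z -> C) : Prop :=
  forall k, (Z.of_nat M < Z.abs k)%Z -> h k = RtoC 0.

Lemma zsumC_ext lo n f g :
  (forall k, (lo <= k < lo + Z.of_nat n)%Z -> f k = g k) -> zsumC lo n f = zsumC lo n g.
Proof. intros H. unfold zsumC. f_equal; apply zsum_ext; intros; rewrite H; auto. Qed.

Lemma boxsumC_ext M f g :
  (forall k, (Z.abs k <= Z.of_nat M)%Z -> f k = g k) -> boxsumC M f = boxsumC M g.
Proof. intros H. apply zsumC_ext. intros; apply H; lia. Qed.

Lemma zsumC_eq0 lo n g :
  (forall k, (lo <= k < lo + Z.of_nat n)%Z -> g k = RtoC 0) -> zsumC lo n g = RtoC 0.
Proof. intros H. unfold zsumC, RtoC. f_equal; apply zsum_eq0; intros; rewrite H; auto. Qed.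

Lemma zsumC_plus lo n f g :
  zsumC lo n (fun k => Cplus (f k) (g k)) = Cplus (zsumC lo n f) (zsumC lo n g).
Proof. unfold zsumC; simpl. rewrite !zsum_plus. auto. Qed.

Lemma zsumC_mult_l lo n c f : zsumC lo n (fun k => Cmult c (f k)) = Cmult c (zsumC lo n f).
Proof.
  unfold zsumC. C_by_components.
  - rewrite <- !zsum_scal, <- zsum_minus. apply zsum_ext; intros; ring.
  - rewrite <- !zsum_scal, <- zsum_plus. apply zsum_ext; intros; ring.
Qed.

Lemma zsumC_mult_r lo n c f : zsumC lo n (fun k => Cmult (f k) c) = Cmult (zsumC lo n f) c.
Proof.
  rewrite Cmult_comm, <- zsumC_mult_l. apply zsumC_ext. intros; apply Cmult_comm.
Qed.

Lemma zsumC_conj lo n f : zsumC lo n (fun k => Cconj (f k)) = Cconj (zsumC lo n f).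
Proof. unfold zsumC. C_by_components. apply zsum_opp. Qed.

Lemma zsumC_swap lo1 n1 lo2 n2 (f : Z -> Z -> C) :
  zsumC lo1 n1 (fun x => zsumC lo2 n2 (fun y => f x y))
  = zsumC lo2 n2 (fun y => zsumC lo1 n1 (fun x => f x y)).
Proof. unfold zsumC; simpl. f_equal; apply zsum_swap. Qed.

Lemma zsumC_reflect lo n c g :
  zsumC lo n (fun k => g (c - k)%Z) = zsumC (c - lo - Z.of_nat n + 1) n g.
Proof. unfold zsumC. f_equal; apply (zsum_reflect lo n c (fun k => _ (g k))). Qed.

Lemma zsumC_shift lo n c g : zsumC lo n (fun k => g (c + k)%Z) = zsumC (c + lo) n g.
Proof. unfold zsumC. f_equal; apply (zsum_shift lo n c (fun k => _ (g k))). Qed.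

Lemma zsumC_widen lo n lo' n' g : (lo' <= lo)%Z -> (lo + Z.of_nat n <= lo' + Z.of_nat n')%Z ->
  (forall k, (lo' <= k < lo' + Z.of_nat n')%Z -> ~ (lo <= k < lo + Z.of_nat n)%Z ->
     g k = RtoC 0) ->
  zsumC lo' n' g = zsumC lo n g.
Proof. intros H1 H2 H. unfold zsumC. f_equal; apply zsum_widen; auto; intros; rewrite H; auto. Qed.

Lemma boxsumC_reflect M g : boxsumC M (fun k => g (- k)%Z) = boxsumC M g.
Proof.
  rewrite (zsumC_ext _ _ _ (fun k => g (0 - k)%Z)) by (intros; f_equal; lia).
  rewrite zsumC_reflect. f_equal. lia.
Qed.

Lemma boxsumC_reflect2 M (f : Z -> Z -> C) :
  boxsumC M (fun x => boxsumC M (fun y => f x y))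
  = boxsumC M (fun x => boxsumC M (fun y => f (- x)%Z (- y)%Z)).
Proof.
  rewrite <- (boxsumC_reflect M (fun x => boxsumC M (fun y => f x y))).
  apply boxsumC_ext. intros x _. rewrite <- (boxsumC_reflect M (fun y => f (- x)%Z y)). auto.
Qed.

Definition summableZ (h : Z -> C) : Prop :=
  summableZR (fun k => fst (h k)) /\ summableZR (fun k => snd (h k)).

Lemma summableZ_finite M h : vanishes_beyondC M h -> summableZ h.
Proof. intros H; split; apply (summableZR_finite M); intros k Hk; rewrite H; auto. Qed.

Lemma sumZ_finite M h : vanishes_beyondC M h -> sumZ h = boxsumC M h.
Proof.
  intros H. unfold sumZ, zsumC. rewrite !(sumZR_finite M); auto; intros k Hk; rewrite H; auto.
Qed.

Lemma summableZ_dominated h b : (forall k, Cmod (h k) <= b k) -> summableZR b -> summableZ h.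
Proof.
  intros H Hb. split; apply (summableZR_le _ b); auto; intros k; eapply Rle_trans;
    [apply re_le_Cmod|apply H| apply Rabs_im_le_Cmod|apply H].
Qed.

Lemma sumZ_Cmod_le h b : (forall k, Cmod (h k) <= b k) -> summableZR b ->
  Cmod (sumZ h) <= 2 * sumZR b.
Proof.
  intros H Hb. eapply Rle_trans; [apply Cmod_le_abs_re_im|]. simpl.
  assert (Re : Rabs (sumZR (fun k => fst (h k))) <= sumZR b).
  { apply sumZR_abs_le; auto. intros k; eapply Rle_trans; [apply re_le_Cmod|apply H]. }
  assert (Im : Rabs (sumZR (fun k => snd (h k))) <= sumZR b).
  { apply sumZR_abs_le; auto. intros k; eapply Rle_trans; [apply Rabs_im_le_Cmod|apply H]. }
  lra.
Qed.

Lemma sumZ_minus f g : summableZ f -> summableZ g ->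
  sumZ (fun k => Cminus (f k) (g k)) = Cminus (sumZ f) (sumZ g).
Proof.
  intros [Hf1 Hf2] [Hg1 Hg2]. unfold sumZ.
  C_by_components; rewrite <- Rminus_def, <- sumZR_minus by auto; f_equal.
Qed.

Definition C_cvg (u : nat -> C) (l : C) : Prop :=
  is_lim_seq (fun n => fst (u n)) (fst l) /\ is_lim_seq (fun n => snd (u n)) (snd l).

Lemma C_cvg_eventually_eq u l : eventually (fun n => u n = l) -> C_cvg u l.
Proof.
  intros [N HN].
  split; [apply (is_lim_seq_ext_loc (fun _ => fst l))|apply (is_lim_seq_ext_loc (fun _ => snd l))];
    try apply is_lim_seq_const; exists N; intros n Hn; rewrite HN; auto.
Qed.

Lemma C_cvg_const_eq u c l : (forall n, u n = c) -> C_cvg u l -> l = c.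
Proof.
  intros Hu [H1 H2].
  assert (E : forall (v : nat -> R) (x y : R), (forall n, v n = x) -> is_lim_seq v y -> y = x).
  { intros v x y Hv Hl. apply is_lim_seq_unique in Hl.
    rewrite (Lim_seq_ext _ _ Hv), Lim_seq_const in Hl. injection Hl; auto. }
  apply injective_projections; [apply (E _ _ _ (fun n => f_equal fst (Hu n)) H1)
                                |apply (E _ _ _ (fun n => f_equal snd (Hu n)) H2)].
Qed.

Lemma C_cvg_plus u v l m : C_cvg u l -> C_cvg v m -> C_cvg (fun n => Cplus (u n) (v n)) (Cplus l m).
Proof. intros [A B] [C D]. split; apply is_lim_seq_plus'; auto. Qed.

Lemma C_cvg_mult u v l m : C_cvg u l -> C_cvg v m -> C_cvg (fun n => Cmult (u n) (v n)) (Cmult l m).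
Proof.
  intros [A B] [C D]. split; simpl.
  - apply is_lim_seq_minus'; apply is_lim_seq_mult'; auto.
  - apply is_lim_seq_plus'; apply is_lim_seq_mult'; auto.
Qed.

Lemma C_cvg_conj u l : C_cvg u l -> C_cvg (fun n => Cconj (u n)) (Cconj l).
Proof. intros [A B]. split; simpl; [|apply (is_lim_seq_opp _ (snd l))]; auto. Qed.

Lemma C_cvg_const c : C_cvg (fun _ => c) c.
Proof. split; apply is_lim_seq_const. Qed.

Lemma C_cvg_of_Cmod_dist u l : is_lim_seq (fun n => Cmod (Cminus (u n) l)) 0 -> C_cvg u l.
Proof.
  intros H.
  assert (Hsq : forall p : C -> R, (forall z, Rabs (p z) <= Cmod z) ->
                 (forall z w, p (Cminus z w) = p z - p w) ->
                 is_lim_seq (fun n => p (u n)) (p l)).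
  { intros p Hp Hlin. apply is_lim_seq_spec. intros eps.
    destruct (proj2 (is_lim_seq_spec _ _) H eps) as [N HN]. exists N. intros n Hn.
    specialize (HN n Hn). rewrite Rminus_0_r, Rabs_pos_eq in HN by apply Cmod_ge_0.
    rewrite <- Hlin. eapply Rle_lt_trans; [apply Hp|auto]. }
  split; apply Hsq; try apply re_le_Cmod; try apply Rabs_im_le_Cmod; intros; simpl; ring.
Qed.

Lemma sumZ_dominated_cvg (u : nat -> Z -> C) (f : Z -> C) (g : Z -> R) :
  (forall k, C_cvg (fun N => u N k) (f k)) ->
  (forall N k, Cmod (u N k) <= g k) -> summableZR g ->
  C_cvg (fun N => sumZ (u N)) (sumZ f).
Proof.
  intros Hl Hb Hg. split; simpl;
    apply (sumZR_dominated_cvg _ _ g); auto; try apply Hl; intros N k;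
    eapply Rle_trans; try apply Hb; [apply re_le_Cmod|apply Rabs_im_le_Cmod].
Qed.

(** * The first identity for trigonometric polynomials *)

Definition real_valued (p : fcoef) : Prop := forall k, p (- k)%Z = Cconj (p k).

Lemma real_valued_conj p k : real_valued p -> Cconj (p k) = p (- k)%Z.
Proof. intros H. rewrite H. auto. Qed.

Definition triple_sum (N : nat) (G : Z -> Z -> Z -> C) : C :=
  boxsumC N (fun x => boxsumC N (fun y => G x y (- x - y)%Z)).

Lemma triple_sum_ext N G H :
  (forall x y, G x y (- x - y)%Z = H x y (- x - y)%Z) -> triple_sum N G = triple_sum N H.
Proof. intros E. do 2 (apply zsumC_ext; intros). apply E. Qed.

Lemma triple_sum_plus N G H :
  triple_sum N (fun x y z => Cplus (G x y z) (H x y z))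
  = Cplus (triple_sum N G) (triple_sum N H).
Proof.
  unfold triple_sum. rewrite <- zsumC_plus. apply zsumC_ext. intros. apply zsumC_plus.
Qed.

Lemma triple_sum_eq0 N G : (forall x y, G x y (- x - y)%Z = RtoC 0) -> triple_sum N G = RtoC 0.
Proof. intros H. apply zsumC_eq0. intros. apply zsumC_eq0. auto. Qed.

Lemma triple_sum_swap12 N G : triple_sum N G = triple_sum N (fun x y z => G y x z).
Proof.
  unfold triple_sum. rewrite zsumC_swap. do 2 (apply zsumC_ext; intros).
  f_equal. lia.
Qed.

(* Substituting [y := - x - y] moves the inner sum off the box, where the hypothesis
   makes the summand vanish. *)
Lemma triple_sum_swap23 N G :
  (forall x y z, (Z.of_nat N < Z.abs y)%Z \/ (Z.of_nat N < Z.abs z)%Z -> G x y z = RtoC 0) ->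
  triple_sum N G = triple_sum N (fun x y z => G x z y).
Proof.
  intros HG. unfold triple_sum. apply zsumC_ext. intros x Hx.
  set (h := fun y => G x y (- x - y)%Z).
  transitivity (zsumC (- 2 * Z.of_nat N) (4 * N + 1) h).
  { symmetry. apply zsumC_widen; try lia. intros k Hk1 Hk2. apply HG. lia. }
  transitivity (zsumC (- Z.of_nat N) (2 * N + 1) (fun y => h (- x - y)%Z)).
  { rewrite zsumC_reflect. apply zsumC_widen; try lia. intros k Hk1 Hk2. apply HG. lia. }
  apply zsumC_ext. intros y Hy. unfold h. f_equal. lia.
Qed.

Lemma triple_sum_symmetric_vanishes N F :
  (forall x y z, F x y z = F y x z) -> (forall x y z, F x y z = F x z y) ->
  (forall x y z, (Z.of_nat N < Z.abs x)%Z \/ (Z.of_nat N < Z.abs y)%Z \/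
                 (Z.of_nat N < Z.abs z)%Z -> F x y z = RtoC 0) ->
  (forall x y z, x = 0%Z \/ y = 0%Z \/ z = 0%Z -> F x y z = RtoC 0) ->
  triple_sum N (fun x y z => Cmult (F x y z) (RtoC (/ (IZR y * IZR z)))) = RtoC 0.
Proof.
  intros S12 S23 Hbox H0.
  set (S w := triple_sum N (fun x y z => Cmult (F x y z) (RtoC (w x y z)))).
  assert (E12 : S (fun x y z => / (IZR y * IZR z)) = S (fun x y z => / (IZR x * IZR z))).
  { unfold S. rewrite triple_sum_swap12. apply triple_sum_ext. intros. rewrite S12. auto. }
  assert (E23 : S (fun x y z => / (IZR x * IZR z)) = S (fun x y z => / (IZR x * IZR y))).
  { unfold S. rewrite triple_sum_swap23.
    - apply triple_sum_ext. intros. rewrite S23. auto.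
    - intros x y z Hyz. rewrite Hbox by tauto. ring. }
  assert (Hsum : Cplus (Cplus (S (fun x y z => / (IZR y * IZR z)))
                              (S (fun x y z => / (IZR x * IZR z))))
                       (S (fun x y z => / (IZR x * IZR y))) = RtoC 0).
  { unfold S. rewrite <- !triple_sum_plus. apply triple_sum_eq0. intros x y.
    destruct (Z.eq_dec x 0) as [Ex|Ex]; [rewrite H0 by auto; ring|].
    destruct (Z.eq_dec y 0) as [Ey|Ey]; [rewrite H0 by auto; ring|].
    destruct (Z.eq_dec (- x - y) 0) as [Ez|Ez]; [rewrite H0 by auto; ring|].
    apply not_0_IZR in Ex, Ey, Ez. rewrite minus_IZR, opp_IZR in *.
    C_by_components; field; auto. }
  rewrite <- E23, <- E12 in Hsum. fold (S (fun x y z => / (IZR y * IZR z))).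
  apply (f_equal (fun c => Cmult c (RtoC (/ 3)))) in Hsum.
  rewrite Cmult_0_l in Hsum. rewrite <- Hsum. C_by_components; field.
Qed.

Definition Xts_summand (t s : R) (p1 p2 : fcoef) (k k1 : Z) : C :=
  if orb (Z.eqb k1 0) (Z.eqb k1 k) then RtoC 0 else
  Cmult (Cdiv (Cminus (cis (- 3 * IZR k * IZR k1 * IZR (k - k1) * s))
                      (cis (- 3 * IZR k * IZR k1 * IZR (k - k1) * t)))
              (RtoC (6 * IZR k1 * IZR (k - k1))))
        (Cmult (p1 k1) (p2 (k - k1)%Z)).

Lemma Xts_finite N t s p1 p2 k : vanishes_beyondC N p1 ->
  Xts t s p1 p2 k = boxsumC N (Xts_summand t s p1 p2 k).
Proof.
  intros H. apply sumZ_finite. intros k1 Hk. unfold Xts_summand.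
  destruct (_ || _)%bool; auto. rewrite (H k1 Hk). ring.
Qed.

Definition Xts_phase (t s : R) (x y z : Z) : C :=
  Cminus (cis (3 * IZR x * IZR y * IZR z * s)) (cis (3 * IZR x * IZR y * IZR z * t)).

Lemma Xts_phase_sym12 t s x y z : Xts_phase t s x y z = Xts_phase t s y x z.
Proof. unfold Xts_phase. do 3 f_equal; ring. Qed.

Lemma Xts_phase_sym23 t s x y z : Xts_phase t s x y z = Xts_phase t s x z y.
Proof. unfold Xts_phase. do 3 f_equal; ring. Qed.

Lemma Xts_summand_pairing t s p x y : real_valued p -> p 0%Z = RtoC 0 ->
  Cmult (p x) (Cconj (Xts_summand t s p p x (- y)))
  = Cmult (Cmult (Cmult (Cmult (Cmult (p x) (p y)) (p (- x - y)%Z)) (Xts_phase t s x y (- x - y)))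
                 (RtoC (/ 6)))
          (RtoC (/ (IZR y * IZR (- x - y)))).
Proof.
  intros Hr H0. unfold Xts_summand.
  destruct (Z.eqb_spec (- y) 0) as [E|E]; simpl.
  { replace y with 0%Z by lia. rewrite H0. C_by_components. }
  destruct (Z.eqb_spec (- y) x) as [E'|E']; simpl.
  { replace (- x - y)%Z with 0%Z by lia. rewrite H0. C_by_components. }
  rewrite !Cmult_conj, Cdiv_RtoC, Cmult_conj, !(real_valued_conj p _ Hr), Cminus_conj, !cis_conj.
  replace (- - y)%Z with y by lia. replace (- (x - - y))%Z with (- x - y)%Z by lia.
  unfold Xts_phase. rewrite !minus_IZR, !opp_IZR.
  replace (- (-3 * IZR x * - IZR y * (IZR x - - IZR y) * s))
    with (3 * IZR x * IZR y * (- IZR x - IZR y) * s) by ring.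
  replace (- (-3 * IZR x * - IZR y * (IZR x - - IZR y) * t))
    with (3 * IZR x * IZR y * (- IZR x - IZR y) * t) by ring.
  replace (Cconj (RtoC (/ (6 * - IZR y * (IZR x - - IZR y)))))
    with (Cmult (RtoC (/ 6)) (RtoC (/ (IZR y * (- IZR x - IZR y))))).
  { ring. }
  apply not_0_IZR in E. rewrite opp_IZR in E. assert (IZR x + IZR y <> 0).
  { intros C. apply E'. apply eq_IZR. rewrite opp_IZR. lra. }
  C_by_components. field; repeat split; lra.
Qed.

Lemma l2inner_Xts_self_finite N p t s :
  vanishes_beyondC N p -> p 0%Z = RtoC 0 -> real_valued p ->
  l2inner p (Xts t s p p) = RtoC 0.
Proof.
  intros Hs H0 Hr. unfold l2inner.
  rewrite (sumZ_finite N) by (intros k Hk; rewrite (Hs k Hk); ring).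
  set (F x y z :=
    Cmult (Cmult (Cmult (Cmult (p x) (p y)) (p z)) (Xts_phase t s x y z)) (RtoC (/ 6))).
  replace (boxsumC N (fun k => Cmult (p k) (Cconj (Xts t s p p k))))
    with (triple_sum N (fun x y z => Cmult (F x y z) (RtoC (/ (IZR y * IZR z))))).
  - rewrite triple_sum_symmetric_vanishes; [ring| | | |]; intros x y z; unfold F.
    + rewrite Xts_phase_sym12. ring.
    + rewrite Xts_phase_sym23. ring.
    + intros [H|[H|H]]; rewrite (Hs _ H); ring.
    + intros [H|[H|H]]; subst; rewrite H0; ring.
  - apply zsumC_ext. intros x Hx.
    rewrite (Xts_finite N) by auto. rewrite <- zsumC_conj, <- zsumC_mult_l.
    rewrite <- (boxsumC_reflect N (fun y => Cmult (p x) (Cconj (Xts_summand t s p p x y)))).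
    apply zsumC_ext. intros y Hy. rewrite Xts_summand_pairing; auto.
Qed.

(** * A pairing identity for Xdot *)

Definition Xdot_summand (sg : R) (p1 p2 : fcoef) (k k1 : Z) : C :=
  if orb (Z.eqb k1 0) (Z.eqb k1 k) then RtoC 0 else
  Cmult (cis (- 3 * IZR k * IZR k1 * IZR (k - k1) * sg)) (Cmult (p1 k1) (p2 (k - k1)%Z)).

Definition Xdot_factor (k : Z) : C := Cmult (0, 1) (RtoC (IZR k / 2)).

Lemma Xdot_finite N sg p1 p2 k : vanishes_beyondC N p1 ->
  Xdot sg p1 p2 k = Cmult (Xdot_factor k) (boxsumC N (Xdot_summand sg p1 p2 k)).
Proof.
  intros H. unfold Xdot. f_equal. apply sumZ_finite. intros k1 Hk. unfold Xdot_summand.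
  destruct (_ || _)%bool; auto. rewrite (H k1 Hk). ring.
Qed.

Section XdotPairings.
Variables (N : nat) (p q : fcoef) (sg : R).
Hypotheses (Hp : vanishes_beyondC N p) (Hp0 : p 0%Z = RtoC 0) (Hpr : real_valued p)
  (Hq0 : q 0%Z = RtoC 0) (Hqr : real_valued q).

Definition Xdot_cubic (x y : Z) : C :=
  Cmult (Cmult (Cmult (p x) (p y)) (q (- x - y)%Z))
        (cis (3 * IZR x * IZR y * IZR (- x - y) * sg)).

Lemma Xdot_cubic_sym x y : Xdot_cubic x y = Xdot_cubic y x.
Proof.
  unfold Xdot_cubic. replace (- y - x)%Z with (- x - y)%Z by lia.
  replace (3 * IZR y * IZR x) with (3 * IZR x * IZR y) by ring. ring.
Qed.

Definition inner_p_Xdot : C := boxsumC N (fun k => Cmult (p k) (Cconj (Xdot sg p q k))).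

Definition inner_Xdot_q : C := boxsumC (2 * N) (fun k => Cmult (Xdot sg p p k) (Cconj (q k))).

Lemma inner_p_Xdot_expand :
  inner_p_Xdot
  = boxsumC N (fun x => boxsumC N (fun y => Cmult (Xdot_cubic x y) (Cconj (Xdot_factor x)))).
Proof.
  apply zsumC_ext. intros x Hx.
  rewrite (Xdot_finite N) by auto. rewrite Cmult_conj, <- zsumC_conj, <- !zsumC_mult_l.
  rewrite <- (boxsumC_reflect N). apply zsumC_ext. intros y Hy. unfold Xdot_summand.
  destruct (Z.eqb_spec (- y) 0) as [E|E]; simpl.
  { replace y with 0%Z by lia. unfold Xdot_cubic. rewrite Hp0. C_by_components. }
  destruct (Z.eqb_spec (- y) x) as [E'|E']; simpl.
  { unfold Xdot_cubic. replace (- x - y)%Z with 0%Z by lia. rewrite Hq0. C_by_components. }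
  rewrite !Cmult_conj, cis_conj, (real_valued_conj p _ Hpr), (real_valued_conj q _ Hqr).
  replace (- - y)%Z with y by lia. replace (- (x - - y))%Z with (- x - y)%Z by lia.
  unfold Xdot_cubic. rewrite !opp_IZR, !minus_IZR, !opp_IZR.
  replace (- (-3 * IZR x * - IZR y * (IZR x - - IZR y) * sg))
    with (3 * IZR x * IZR y * (- IZR x - IZR y) * sg) by ring.
  ring.
Qed.

Lemma inner_Xdot_q_expand :
  inner_Xdot_q
  = boxsumC N (fun x => boxsumC N (fun y => Cmult (Xdot_cubic x y) (Xdot_factor (x + y)))).
Proof.
  unfold inner_Xdot_q.
  rewrite (zsumC_ext _ _ _ (fun k => boxsumC N (fun k1 =>
             Cmult (Cmult (Xdot_factor k) (Xdot_summand sg p p k k1)) (q (- k)%Z)))).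
  2:{ intros k Hk. rewrite (Xdot_finite N) by auto. rewrite <- zsumC_mult_l, <- zsumC_mult_r.
      rewrite (real_valued_conj q _ Hqr). auto. }
  rewrite zsumC_swap. apply zsumC_ext. intros x Hx.
  set (r := fun k => Cmult (Cmult (Xdot_factor k) (Xdot_summand sg p p k x)) (q (- k)%Z)).
  transitivity (zsumC (x - Z.of_nat N) (2 * N + 1) r).
  { apply zsumC_widen; try lia. intros k Hk1 Hk2. unfold r, Xdot_summand.
    destruct (_ || _)%bool; [ring|]. rewrite (Hp (k - x)%Z) by lia. ring. }
  replace (x - Z.of_nat N)%Z with (x + - Z.of_nat N)%Z by lia.
  rewrite <- zsumC_shift. apply zsumC_ext. intros y Hy. unfold r, Xdot_summand.
  replace (x + y - x)%Z with y by lia.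
  destruct (Z.eqb_spec x 0) as [E|E]; simpl.
  { subst x. unfold Xdot_cubic. rewrite Hp0. ring. }
  destruct (Z.eqb_spec x (x + y)) as [E'|E']; simpl.
  { replace y with 0%Z by lia. unfold Xdot_cubic. rewrite Hp0. ring. }
  unfold Xdot_cubic. replace (- (x + y))%Z with (- x - y)%Z by lia.
  rewrite !plus_IZR, !minus_IZR, !opp_IZR.
  replace (-3 * (IZR x + IZR y) * IZR x * IZR y * sg)
    with (3 * IZR x * IZR y * (- IZR x - IZR y) * sg) by ring.
  ring.
Qed.

(* Symmetrising [inner_p_Xdot] in [x, y] turns its factor [conj (i x / 2)] into
   [- i (x + y) / 4], which cancels against [inner_Xdot_q]. *)
Lemma inner_Xdot_identity : Cplus (Cmult (RtoC 2) inner_p_Xdot) inner_Xdot_q = RtoC 0.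
Proof.
  assert (Hsym : inner_p_Xdot
            = boxsumC N (fun x => boxsumC N (fun y =>
                Cmult (Xdot_cubic x y) (Cconj (Xdot_factor y))))).
  { rewrite inner_p_Xdot_expand, zsumC_swap.
    do 2 (apply zsumC_ext; intros). rewrite Xdot_cubic_sym. auto. }
  replace (Cmult (RtoC 2) inner_p_Xdot) with (Cplus inner_p_Xdot inner_p_Xdot) by ring.
  rewrite inner_p_Xdot_expand at 1. rewrite Hsym, inner_Xdot_q_expand, <- !zsumC_plus.
  apply zsumC_eq0. intros x _. rewrite <- !zsumC_plus. apply zsumC_eq0. intros y _.
  unfold Xdot_factor. rewrite plus_IZR. C_by_components; field.
Qed.

Lemma inner_p_Xdot_real : Cconj inner_p_Xdot = inner_p_Xdot.
Proof.
  rewrite inner_p_Xdot_expand at 1.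
  rewrite <- zsumC_conj, (zsumC_ext _ _ _ (fun x => boxsumC N (fun y =>
             Cconj (Cmult (Xdot_cubic x y) (Cconj (Xdot_factor x)))))).
  2:{ intros. rewrite <- zsumC_conj. auto. }
  rewrite boxsumC_reflect2, inner_p_Xdot_expand.
  apply zsumC_ext; intros x _; apply zsumC_ext; intros y _.
  unfold Xdot_cubic.
  rewrite !Cmult_conj, cis_conj, Cconj_conj, !(real_valued_conj _ _ Hpr), (real_valued_conj _ _ Hqr).
  replace (- - x)%Z with x by lia. replace (- - y)%Z with y by lia.
  replace (- (x - - y))%Z with (- x - y)%Z by lia.
  unfold Xdot_factor. rewrite !opp_IZR, !minus_IZR, !opp_IZR.
  replace (- (3 * - IZR x * - IZR y * (IZR x - - IZR y) * sg))
    with (3 * IZR x * IZR y * (- IZR x - IZR y) * sg) by ring.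
  C_by_components; unfold Rdiv; ring.
Qed.

End XdotPairings.

(** * Calculus of complex-valued functions of a real variable *)

Definition is_derive_C (f : R -> C) (x : R) (l : C) : Prop :=
  is_derive (fun y => fst (f y)) x (fst l) /\ is_derive (fun y => snd (f y)) x (snd l).

Definition continuous_C (f : R -> C) (x : R) : Prop :=
  continuous (fun y => fst (f y)) x /\ continuous (fun y => snd (f y)) x.

Definition is_RInt_C (f : R -> C) (a b : R) (l : C) : Prop :=
  is_RInt (fun y => fst (f y)) a b (fst l) /\ is_RInt (fun y => snd (f y)) a b (snd l).

Lemma is_derive_C_ext f g x l l' :
  (forall y, f y = g y) -> l = l' -> is_derive_C f x l -> is_derive_C g x l'.
Proof.
  intros H <- [H1 H2].
  split; [apply (is_derive_ext (fun y => fst (f y)))|apply (is_derive_ext (fun y => snd (f y)))];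
    auto; intros; rewrite H; auto.
Qed.

Lemma is_derive_C_const c x : is_derive_C (fun _ => c) x (RtoC 0).
Proof. split; exact (is_derive_const _ x). Qed.

Lemma is_derive_C_minus f g x lf lg : is_derive_C f x lf -> is_derive_C g x lg ->
  is_derive_C (fun y => Cminus (f y) (g y)) x (Cminus lf lg).
Proof.
  intros [A B] [C D].
  split; simpl; [apply (is_derive_minus (fun y => fst (f y)) (fun y => fst (g y)))
                |apply (is_derive_minus (fun y => snd (f y)) (fun y => snd (g y)))]; auto.
Qed.

Lemma is_derive_C_mult f g x lf lg : is_derive_C f x lf -> is_derive_C g x lg ->
  is_derive_C (fun y => Cmult (f y) (g y)) x (Cplus (Cmult lf (g x)) (Cmult (f x) lg)).
Proof.
  intros [A B] [C D].
  assert (M : forall (u v : R -> R) du dv, is_derive u x du -> is_derive v x dv ->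
            is_derive (fun y => u y * v y) x (du * v x + u x * dv)).
  { intros u v du dv Hu Hv. apply (is_derive_mult u v); auto. intros; apply Rmult_comm. }
  split; simpl.
  - eapply is_derive_ext; [intros; reflexivity|].
    replace (fst lf * fst (g x) - snd lf * snd (g x) + (fst (f x) * fst lg - snd (f x) * snd lg))
      with ((fst lf * fst (g x) + fst (f x) * fst lg) - (snd lf * snd (g x) + snd (f x) * snd lg))
      by ring.
    apply (is_derive_minus (fun y => fst (f y) * fst (g y)) (fun y => snd (f y) * snd (g y)));
      apply M; auto.
  - replace (fst lf * snd (g x) + snd lf * fst (g x) + (fst (f x) * snd lg + snd (f x) * fst lg))
      with ((fst lf * snd (g x) + fst (f x) * snd lg) + (snd lf * fst (g x) + snd (f x) * fst lg))
      by ring.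
    apply (is_derive_plus (fun y => fst (f y) * snd (g y)) (fun y => snd (f y) * fst (g y)));
      apply M; auto.
Qed.

Lemma is_derive_C_mult_l c f x l : is_derive_C f x l ->
  is_derive_C (fun y => Cmult c (f y)) x (Cmult c l).
Proof.
  intros H. eapply is_derive_C_ext; [intros; reflexivity| |].
  2:{ apply (is_derive_C_mult (fun _ => c) f); [apply is_derive_C_const|exact H]. }
  ring.
Qed.

Lemma is_derive_C_mult_r f c x l : is_derive_C f x l ->
  is_derive_C (fun y => Cmult (f y) c) x (Cmult l c).
Proof.
  intros H. eapply is_derive_C_ext; [intros; reflexivity| |].
  2:{ apply (is_derive_C_mult f (fun _ => c)); [exact H|apply is_derive_C_const]. }
  ring.
Qed.

Lemma is_derive_C_conj f x l : is_derive_C f x l -> is_derive_C (fun y => Cconj (f y)) x (Cconj l).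
Proof. intros [A B]. split; simpl; auto. apply (is_derive_opp (fun y => snd (f y))); auto. Qed.

Lemma is_derive_C_cis a x : is_derive_C (fun y => cis (a * y)) x (Cmult (0, a) (cis (a * x))).
Proof. split; simpl; auto_derive; auto; ring. Qed.

Lemma is_derive_C_zsumC lo n (h : Z -> R -> C) l x : (forall j, is_derive_C (h j) x (l j)) ->
  is_derive_C (fun y => zsumC lo n (fun j => h j y)) x (zsumC lo n l).
Proof.
  intros H. unfold zsumC.
  assert (D : forall (u : Z -> R -> R) du, (forall j, is_derive (u j) x (du j)) ->
            forall lo, is_derive (fun y => zsum lo n (fun j => u j y)) x (zsum lo n du)).
  { intros u du Hu. induction n as [|n IH]; intros lo'; simpl.
    - exact (is_derive_const _ x).
    - apply (is_derive_plus (u lo') (fun y => zsum (lo' + 1) n (fun j => u j y))); auto. }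
  split; simpl; [apply (D (fun j y => fst (h j y)))|apply (D (fun j y => snd (h j y)))];
    intros; apply H.
Qed.

Lemma is_derive_C_continuous f x l : is_derive_C f x l -> continuous_C f x.
Proof.
  intros [A B]. split; apply (@ex_derive_continuous R_AbsRing R_NormedModule); eexists; eauto.
Qed.

Lemma is_RInt_C_RInt f a b l : is_RInt_C f a b l -> RInt (V := C_R_CompleteNormedModule) f a b = l.
Proof.
  intros [H1 H2]. destruct l as [l1 l2]. apply is_RInt_unique.
  apply (is_RInt_fct_extend_pair (U := R_NormedModule) (V := R_NormedModule)); auto.
Qed.

Lemma is_RInt_C_unique f a b l l' : is_RInt_C f a b l -> is_RInt_C f a b l' -> l = l'.
Proof. intros H H'. rewrite <- (is_RInt_C_RInt _ _ _ _ H), <- (is_RInt_C_RInt _ _ _ _ H'). auto. Qed.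

Lemma is_RInt_C_ext f g a b l : (forall y, f y = g y) -> is_RInt_C f a b l -> is_RInt_C g a b l.
Proof.
  intros H [A B].
  split; eapply is_RInt_ext; try eassumption; intros; simpl; rewrite H; auto.
Qed.

Lemma is_RInt_C_zero a b : is_RInt_C (fun _ => RtoC 0) a b (RtoC 0).
Proof.
  pose proof (is_RInt_const (V := R_NormedModule) a b 0) as K.
  match type of K with is_RInt _ _ _ ?v => replace v with 0 in K end.
  - split; exact K.
  - unfold scal; simpl; unfold mult; simpl. ring.
Qed.

Lemma is_RInt_C_plus f g a b lf lg : is_RInt_C f a b lf -> is_RInt_C g a b lg ->
  is_RInt_C (fun y => Cplus (f y) (g y)) a b (Cplus lf lg).
Proof.
  intros [A B] [C D].
  split; [apply (is_RInt_plus (fun y => fst (f y)) (fun y => fst (g y)))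
         |apply (is_RInt_plus (fun y => snd (f y)) (fun y => snd (g y)))]; auto.
Qed.

Lemma is_RInt_C_mult_l c f a b l : is_RInt_C f a b l ->
  is_RInt_C (fun y => Cmult c (f y)) a b (Cmult c l).
Proof.
  intros [A B].
  assert (L : forall (u v : R -> R) lu lv p q, is_RInt u a b lu -> is_RInt v a b lv ->
            is_RInt (fun y => p * u y + q * v y) a b (p * lu + q * lv)).
  { intros u v lu lv p q Hu Hv.
    apply (is_RInt_plus (fun y => p * u y) (fun y => q * v y));
      [apply (is_RInt_scal u a b p lu)|apply (is_RInt_scal v a b q lv)]; auto. }
  split; simpl.
  - replace (fst c * fst l - snd c * snd l) with (fst c * fst l + - snd c * snd l) by ring.
    eapply is_RInt_ext; [|apply L; eauto]. intros; simpl; ring.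
  - eapply is_RInt_ext; [|apply L; eauto]. intros; simpl; ring.
Qed.

Lemma is_RInt_C_conj f a b l : is_RInt_C f a b l ->
  is_RInt_C (fun y => Cconj (f y)) a b (Cconj l).
Proof. intros [A B]. split; simpl; auto. apply (is_RInt_opp (fun y => snd (f y))); auto. Qed.

Lemma is_RInt_C_zsumC lo n (h : Z -> R -> C) l a b : (forall j, is_RInt_C (h j) a b (l j)) ->
  is_RInt_C (fun y => zsumC lo n (fun j => h j y)) a b (zsumC lo n l).
Proof.
  revert lo; induction n as [|n IH]; intros lo H.
  - eapply is_RInt_C_ext; [|apply is_RInt_C_zero]. intros; unfold zsumC; simpl; auto.
  - apply (is_RInt_C_ext (fun y => Cplus (h lo y) (zsumC (lo + 1) n (fun j => h j y)))).
    { intros; unfold zsumC; simpl; auto. }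
    replace (zsumC lo (S n) l) with (Cplus (l lo) (zsumC (lo + 1) n l))
      by (unfold zsumC; simpl; auto).
    apply is_RInt_C_plus; auto.
Qed.

Lemma is_RInt_C_continuous f a b : (forall y, continuous_C f y) -> exists l, is_RInt_C f a b l.
Proof.
  intros H.
  destruct (@ex_RInt_continuous R_CompleteNormedModule (fun y => fst (f y)) a b) as [l1 H1].
  { intros; apply H. }
  destruct (@ex_RInt_continuous R_CompleteNormedModule (fun y => snd (f y)) a b) as [l2 H2].
  { intros; apply H. }
  exists (l1, l2). split; auto.
Qed.

Lemma is_RInt_C_derive F f a b :
  (forall y, is_derive_C F y (f y)) -> (forall y, continuous_C f y) ->
  is_RInt_C f a b (Cminus (F b) (F a)).
Proof.
  intros HD HC.
  assert (FTC : forall (u du : R -> R), (forall y, is_derive u y (du y)) ->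
            (forall y, continuous du y) -> is_RInt du a b (u b - u a)).
  { intros u du Hu Hdu. apply (@is_RInt_derive R_CompleteNormedModule u du); auto. }
  split; simpl; rewrite <- Rminus_def;
    [apply (FTC (fun y => fst (F y)))|apply (FTC (fun y => snd (F y)))];
    intros; try apply HD; apply HC.
Qed.

(** * The second identity for trigonometric polynomials *)

Lemma is_derive_Xdot_right N sg p (q : R -> fcoef) dq x k : vanishes_beyondC N p ->
  (forall m, is_derive_C (fun y => q y m) x (dq m)) ->
  is_derive_C (fun y => Xdot sg p (q y) k) x (Xdot sg p dq k).
Proof.
  intros Hp Hq.
  apply (is_derive_C_ext (fun y => Cmult (Xdot_factor k) (boxsumC N (Xdot_summand sg p (q y) k)))
           _ _ (Cmult (Xdot_factor k) (boxsumC N (Xdot_summand sg p dq k))));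
    [intros; rewrite (Xdot_finite N); auto|rewrite (Xdot_finite N); auto|].
  apply is_derive_C_mult_l, (is_derive_C_zsumC _ _ (fun j y => Xdot_summand sg p (q y) k j)).
  intros j. unfold Xdot_summand.
  destruct (_ || _)%bool; [apply is_derive_C_const|apply is_derive_C_mult_l, is_derive_C_mult_l; auto].
Qed.

Lemma ex_derive_Xdot_both N p (q : R -> fcoef) dq x k : vanishes_beyondC N p ->
  (forall m, is_derive_C (fun y => q y m) x (dq m)) ->
  exists l, is_derive_C (fun y => Xdot y p (q y) k) x l.
Proof.
  intros Hp Hq.
  set (A j := -3 * IZR k * IZR j * IZR (k - j)).
  set (L j := if orb (Z.eqb j 0) (Z.eqb j k) then RtoC 0 else
     Cplus (Cmult (Cmult (0, A j) (cis (A j * x))) (Cmult (p j) (q x (k - j)%Z)))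
           (Cmult (cis (A j * x)) (Cmult (p j) (dq (k - j)%Z)))).
  exists (Cmult (Xdot_factor k) (boxsumC N L)).
  apply (is_derive_C_ext (fun y => Cmult (Xdot_factor k) (boxsumC N (Xdot_summand y p (q y) k)))
           _ _ (Cmult (Xdot_factor k) (boxsumC N L)));
    [intros; rewrite (Xdot_finite N); auto|auto|].
  apply is_derive_C_mult_l, (is_derive_C_zsumC _ _ (fun j y => Xdot_summand y p (q y) k j)).
  intros j. unfold Xdot_summand, L.
  destruct (_ || _)%bool; [apply is_derive_C_const|].
  apply (is_derive_C_mult (fun y => cis (A j * y)) (fun y => Cmult (p j) (q y (k - j)%Z))).
  - apply is_derive_C_cis.
  - apply is_derive_C_mult_l; auto.
Qed.

Section SecondIdentityFinite.
Variables (N : nat) (p : fcoef) (s t : R).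
Hypotheses (Hp : vanishes_beyondC N p) (Hp0 : p 0%Z = RtoC 0) (Hpr : real_valued p).

Lemma Xts_self_vanishes_beyond tau : vanishes_beyondC (2 * N) (Xts tau s p p).
Proof.
  intros m Hm. rewrite (Xts_finite N) by auto. apply zsumC_eq0. intros j Hj.
  unfold Xts_summand. destruct (_ || _)%bool; auto. rewrite (Hp (m - j)%Z) by lia. ring.
Qed.

Lemma Xts_self_zero_mode tau : Xts tau s p p 0%Z = RtoC 0.
Proof.
  rewrite (Xts_finite N) by auto. apply zsumC_eq0. intros j Hj.
  unfold Xts_summand. destruct (_ || _)%bool; auto.
  replace (-3 * IZR 0 * IZR j * IZR (0 - j) * s) with 0 by (simpl; ring).
  replace (-3 * IZR 0 * IZR j * IZR (0 - j) * tau) with 0 by (simpl; ring).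
  rewrite Cdiv_RtoC. ring.
Qed.

Lemma Xts_self_at_s m : Xts s s p p m = RtoC 0.
Proof.
  rewrite (Xts_finite N) by auto. apply zsumC_eq0. intros j Hj.
  unfold Xts_summand. destruct (_ || _)%bool; auto. rewrite Cdiv_RtoC. ring.
Qed.

Lemma Xts_self_real_valued tau : real_valued (Xts tau s p p).
Proof.
  intros m. rewrite !(Xts_finite N) by auto.
  rewrite <- zsumC_conj, <- (boxsumC_reflect N (fun j => Cconj (Xts_summand tau s p p m j))).
  apply zsumC_ext. intros j _. unfold Xts_summand.
  destruct (Z.eqb_spec j 0) as [E|E]; simpl.
  { subst. simpl. C_by_components. }
  destruct (Z.eqb_spec (- j) 0) as [E1|E1]; [lia|]. simpl.
  destruct (Z.eqb_spec j (- m)) as [E2|E2]; destruct (Z.eqb_spec (- j) m) as [E3|E3];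
    try lia; simpl; [C_by_components|].
  rewrite Cmult_conj, !Cdiv_RtoC, !Cmult_conj, !(real_valued_conj _ _ Hpr).
  rewrite Cminus_conj, !cis_conj.
  replace (- - j)%Z with j by lia. replace (- (m - - j))%Z with (- m - j)%Z by lia.
  rewrite !minus_IZR, !opp_IZR.
  replace (- (-3 * IZR m * - IZR j * (IZR m - - IZR j) * s))
    with (-3 * - IZR m * IZR j * (- IZR m - IZR j) * s) by ring.
  replace (- (-3 * IZR m * - IZR j * (IZR m - - IZR j) * tau))
    with (-3 * - IZR m * IZR j * (- IZR m - IZR j) * tau) by ring.
  replace (6 * - IZR j * (IZR m - - IZR j)) with (6 * IZR j * (- IZR m - IZR j)) by ring.
  f_equal. C_by_components.
Qed.

Lemma is_derive_Xts m x : is_derive_C (fun tau => Xts tau s p p m) x (Xdot x p p m).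
Proof.
  apply (is_derive_C_ext (fun tau => boxsumC N (Xts_summand tau s p p m)) _ _
           (boxsumC N (fun j => Cmult (Xdot_factor m) (Xdot_summand x p p m j))));
    [intros; rewrite (Xts_finite N); auto|rewrite (Xdot_finite N), zsumC_mult_l; auto|].
  apply (is_derive_C_zsumC _ _ (fun j tau => Xts_summand tau s p p m j)). intros j.
  unfold Xts_summand, Xdot_summand.
  destruct (Z.eqb_spec j 0) as [E|E]; simpl;
    [eapply is_derive_C_ext; [intros; reflexivity| |apply is_derive_C_const]; ring|].
  destruct (Z.eqb_spec j m) as [E'|E']; simpl;
    [eapply is_derive_C_ext; [intros; reflexivity| |apply is_derive_C_const]; ring|].
  set (A := -3 * IZR m * IZR j * IZR (m - j)).
  set (r := 6 * IZR j * IZR (m - j)).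
  apply (is_derive_C_ext
           (fun y => Cmult (Cmult (Cminus (cis (A * s)) (cis (A * y))) (RtoC (/ r)))
                           (Cmult (p j) (p (m - j)%Z)))
           _ _ (Cmult (Cmult (Cminus (RtoC 0) (Cmult (0, A) (cis (A * x)))) (RtoC (/ r)))
                      (Cmult (p j) (p (m - j)%Z)))).
  - intros y. rewrite Cdiv_RtoC. reflexivity.
  - assert (EA : - A * / r = IZR m / 2).
    { apply not_0_IZR in E. assert (IZR m - IZR j <> 0) by (intros C; apply E'; apply eq_IZR; lra).
      unfold A, r. rewrite minus_IZR. field. split; auto. }
    unfold Xdot_factor. rewrite <- EA. C_by_components.
  - apply is_derive_C_mult_r, is_derive_C_mult_r, is_derive_C_minus;
      [apply is_derive_C_const|apply is_derive_C_cis].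
Qed.

Lemma ex_derive_Xdot_self m x : exists l, is_derive_C (fun tau => Xdot tau p p m) x l.
Proof.
  apply (ex_derive_Xdot_both N p (fun _ => p) (fun _ => RtoC 0)); auto.
  intros; apply is_derive_C_const.
Qed.

Lemma continuous_Xdot_Xdot sg k y : continuous_C (fun sg1 => Xdot sg p (Xdot sg1 p p) k) y.
Proof.
  destruct (choice (fun (m : Z) (l : C) => is_derive_C (fun tau => Xdot tau p p m) y l)
              (fun m => ex_derive_Xdot_self m y)) as [L HL].
  eapply is_derive_C_continuous, (is_derive_Xdot_right N sg p (fun sg1 => Xdot sg1 p p) L); auto.
Qed.

Lemma RInt_Xdot_Xdot sg k :
  RInt (V := C_R_CompleteNormedModule) (fun sg1 => Xdot sg p (Xdot sg1 p p) k) s sg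
  = Xdot sg p (Xts sg s p p) k.
Proof.
  apply is_RInt_C_RInt.
  replace (Xdot sg p (Xts sg s p p) k)
    with (Cminus (Xdot sg p (Xts sg s p p) k) (Xdot sg p (Xts s s p p) k)).
  - apply (is_RInt_C_derive (fun y => Xdot sg p (Xts y s p p) k)).
    + intros y. apply (is_derive_Xdot_right N); auto. intros m. apply is_derive_Xts.
    + apply continuous_Xdot_Xdot.
  - rewrite (Xdot_finite N sg p (Xts s s p p)) by auto.
    rewrite zsumC_eq0; [ring|]. intros j _. unfold Xdot_summand.
    destruct (_ || _)%bool; auto. rewrite Xts_self_at_s. ring.
Qed.

Lemma X2ts_trig_as_RInt k : X2ts_trig t s p p p k =
  Cmult (RtoC 2) (RInt (V := C_R_CompleteNormedModule) (fun sg => Xdot sg p (Xts sg s p p) k) s t).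
Proof. unfold X2ts_trig. f_equal. apply RInt_ext. intros x _. apply RInt_Xdot_Xdot. Qed.

Lemma ex_derive_Xdot_Xts k x : exists l, is_derive_C (fun sg => Xdot sg p (Xts sg s p p) k) x l.
Proof.
  apply (ex_derive_Xdot_both N p (fun sg => Xts sg s p p) (Xdot x p p)); auto.
  intros; apply is_derive_Xts.
Qed.

Lemma continuous_Xdot_Xts k y : continuous_C (fun sg => Xdot sg p (Xts sg s p p) k) y.
Proof. destruct (ex_derive_Xdot_Xts k y) as [l H]. eapply is_derive_C_continuous; eauto. Qed.

Definition norm2_Xts (tau : R) : C :=
  boxsumC (2 * N) (fun k => Cmult (Xts tau s p p k) (Cconj (Xts tau s p p k))).

Lemma inner_Xdot_Xts_self x :
  inner_Xdot_q N p (Xts x s p p) x = Cmult (RtoC (-2)) (inner_p_Xdot N p (Xts x s p p) x).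
Proof.
  pose proof (inner_Xdot_identity N p (Xts x s p p) x Hp Hp0 Hpr
                (Xts_self_zero_mode x) (Xts_self_real_valued x)) as E.
  apply (f_equal (fun z => Cminus z (Cmult (RtoC 2) (inner_p_Xdot N p (Xts x s p p) x)))) in E.
  rewrite <- (Cplus_0_l (Cmult (RtoC (-2)) _)).
  replace (Cmult (RtoC (-2)) (inner_p_Xdot N p (Xts x s p p) x))
    with (Cminus (RtoC 0) (Cmult (RtoC 2) (inner_p_Xdot N p (Xts x s p p) x))) by C_by_components.
  rewrite Cplus_0_l, <- E. ring.
Qed.

Lemma is_derive_norm2_Xts x :
  is_derive_C norm2_Xts x (Cmult (RtoC (-4)) (inner_p_Xdot N p (Xts x s p p) x)).
Proof.
  eapply is_derive_C_ext; [intros; reflexivity| |].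
  2:{ apply (is_derive_C_zsumC _ _ (fun k tau => Cmult (Xts tau s p p k) (Cconj (Xts tau s p p k)))).
      intros k. apply is_derive_C_mult; [|apply is_derive_C_conj]; apply is_derive_Xts. }
  rewrite zsumC_plus.
  replace (boxsumC (2 * N) (fun k => Cmult (Xts x s p p k) (Cconj (Xdot x p p k))))
    with (Cconj (inner_Xdot_q N p (Xts x s p p) x)).
  2:{ unfold inner_Xdot_q. rewrite <- zsumC_conj. apply zsumC_ext. intros.
      rewrite Cmult_conj, Cconj_conj. ring. }
  change (boxsumC (2 * N) (fun k => Cmult (Xdot x p p k) (Cconj (Xts x s p p k))))
    with (inner_Xdot_q N p (Xts x s p p) x).
  rewrite inner_Xdot_Xts_self, Cmult_conj,
    (inner_p_Xdot_real N p (Xts x s p p) x Hp Hp0 Hpr (Xts_self_zero_mode x) (Xts_self_real_valued x)).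
  C_by_components.
Qed.

Lemma norm2_Xts_at_s : norm2_Xts s = RtoC 0.
Proof. apply zsumC_eq0. intros. rewrite Xts_self_at_s. ring. Qed.

Lemma continuous_inner_p_Xdot_Xts y :
  continuous_C (fun sg => inner_p_Xdot N p (Xts sg s p p) sg) y.
Proof.
  destruct (choice (fun (k : Z) (l : C) => is_derive_C (fun sg => Xdot sg p (Xts sg s p p) k) y l)
              (fun k => ex_derive_Xdot_Xts k y)) as [L HL].
  eapply is_derive_C_continuous.
  apply (is_derive_C_zsumC _ _ (fun k sg => Cmult (p k) (Cconj (Xdot sg p (Xts sg s p p) k)))).
  intros k. apply is_derive_C_mult_l, is_derive_C_conj, HL.
Qed.

Lemma inner_p_RInt_Xdot_Xts :
  boxsumC N (fun k => Cmult (p k) (Cconj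
    (RInt (V := C_R_CompleteNormedModule) (fun sg => Xdot sg p (Xts sg s p p) k) s t)))
  = Cmult (RtoC (- / 4)) (norm2_Xts t).
Proof.
  apply (is_RInt_C_unique (fun sg => inner_p_Xdot N p (Xts sg s p p) sg) s t).
  - apply (is_RInt_C_zsumC _ _ (fun k sg => Cmult (p k) (Cconj (Xdot sg p (Xts sg s p p) k)))).
    intros k. apply is_RInt_C_mult_l, is_RInt_C_conj.
    destruct (is_RInt_C_continuous (fun sg => Xdot sg p (Xts sg s p p) k) s t) as [l Hl].
    { apply continuous_Xdot_Xts. }
    rewrite (is_RInt_C_RInt _ _ _ _ Hl). auto.
  - replace (Cmult (RtoC (- / 4)) (norm2_Xts t))
      with (Cminus (Cmult (RtoC (- / 4)) (norm2_Xts t)) (Cmult (RtoC (- / 4)) (norm2_Xts s)))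
      by (rewrite norm2_Xts_at_s; ring).
    apply (is_RInt_C_derive (fun tau => Cmult (RtoC (- / 4)) (norm2_Xts tau))).
    + intros y. eapply is_derive_C_ext; [intros; reflexivity| |].
      2:{ apply is_derive_C_mult_l, is_derive_norm2_Xts. }
      rewrite Cmult_assoc.
      replace (Cmult (RtoC (- / 4)) (RtoC (-4))) with (RtoC 1) by (C_by_components; field).
      ring.
    + apply continuous_inner_p_Xdot_Xts.
Qed.

Lemma second_identity_finite :
  Cplus (Cmult (RtoC 2) (l2inner p (X2ts_trig t s p p p))) (l2inner (Xts t s p p) (Xts t s p p))
  = RtoC 0.
Proof.
  unfold l2inner.
  rewrite (sumZ_finite N) by (intros k Hk; rewrite (Hp k Hk); ring).
  rewrite (sumZ_finite (2 * N))
    by (intros k Hk; rewrite (Xts_self_vanishes_beyond t k Hk); ring).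
  rewrite (zsumC_ext _ _ _ (fun k => Cmult (RtoC 2) (Cmult (p k) (Cconj
             (RInt (V := C_R_CompleteNormedModule) (fun sg => Xdot sg p (Xts sg s p p) k) s t))))).
  2:{ intros k _. rewrite X2ts_trig_as_RInt, Cmult_conj.
      replace (Cconj (RtoC 2)) with (RtoC 2) by C_by_components. ring. }
  rewrite zsumC_mult_l, inner_p_RInt_Xdot_Xts. fold (norm2_Xts t).
  C_by_components; field.
Qed.

End SecondIdentityFinite.

(** * Bounds on X_ts *)

Lemma summableZR_inv_sq : summableZR (fun k => (/ IZR k) ^ 2).
Proof.
  enough (B : forall M, boxsum M (fun k => (/ IZR k) ^ 2) <= 4)
    by exact (proj1 (sumZR_bounded_boxes _ 4 (fun k => pow2_ge_0 _) B)).
  assert (Tel : forall M, boxsum M (fun k => (/ IZR k) ^ 2) <= 4 - 4 / (INR M + 1)).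
  { induction M as [|M IH].
    - rewrite boxsum_0. simpl. rewrite Rinv_0. replace (4 / (0 + 1)) with 4 by field. lra.
    - rewrite boxsum_S. unfold sumZR_term. rewrite opp_IZR, <- INR_IZR_INZ, S_INR, Rinv_opp.
      pose proof (pos_INR M).
      set (x := INR M + 1) in *. assert (1 <= x) by (unfold x; lra).
      assert (E : 4 / x - 4 / (x + 1) - ((/ x) ^ 2 + (- / x) ^ 2) = (2 * x - 2) / (x ^ 2 * (x + 1)))
        by (field; lra).
      assert (0 <= (2 * x - 2) / (x ^ 2 * (x + 1))) by (apply Rdiv_le_0_compat; nra).
      lra. }
  intros M. specialize (Tel M). pose proof (pos_INR M).
  assert (0 <= 4 / (INR M + 1)) by (apply Rdiv_le_0_compat; lra). lra.
Qed.

Lemma Rabs_mult_le_sq x y : Rabs (x * y) <= x ^ 2 + y ^ 2.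
Proof.
  rewrite Rabs_mult, <- (pow2_abs x), <- (pow2_abs y).
  pose proof (Rabs_pos x); pose proof (Rabs_pos y). nra.
Qed.

Definition damped (phi : fcoef) (k : Z) : R := Cmod (phi k) * Rabs (/ IZR k).

Definition damped_conv (phi : fcoef) (k : Z) : R :=
  sumZR (fun k1 => damped phi k1 * damped phi (k - k1)%Z).

Section DampedBounds.
Variable phi : fcoef.
Hypothesis Hl2 : in_l2 phi.

Lemma damped_ge0 k : 0 <= damped phi k.
Proof. apply Rmult_le_pos; [apply Cmod_ge_0|apply Rabs_pos]. Qed.

Lemma damped_summable : summableZR (damped phi).
Proof.
  apply (summableZR_le _ (fun k => Cmod (phi k) ^ 2 + (/ IZR k) ^ 2));
    [|apply summableZR_plus; [exact Hl2|apply summableZR_inv_sq]].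
  intros k. unfold damped. rewrite <- (pow2_abs (/ IZR k)). apply Rabs_mult_le_sq.
Qed.

Lemma damped_le_sum k : damped phi k <= sumZR (damped phi).
Proof. apply single_le_sumZR; [apply damped_ge0|apply damped_summable]. Qed.

Lemma damped_product_le k k1 :
  damped phi k1 * damped phi (k - k1)%Z <= sumZR (damped phi) * damped phi k1.
Proof.
  rewrite Rmult_comm. apply Rmult_le_compat_r; [apply damped_ge0|apply damped_le_sum].
Qed.

Lemma damped_product_summable k : summableZR (fun k1 => damped phi k1 * damped phi (k - k1)%Z).
Proof.
  apply (summableZR_le _ (fun k1 => sumZR (damped phi) * damped phi k1));
    [|apply summableZR_scal, damped_summable].
  intros k1. rewrite Rabs_pos_eq by (apply Rmult_le_pos; apply damped_ge0).
  apply damped_product_le.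
Qed.

Lemma damped_conv_ge0 k : 0 <= damped_conv phi k.
Proof.
  apply sumZR_ge0; [intros; apply Rmult_le_pos; apply damped_ge0|apply damped_product_summable].
Qed.

Lemma damped_conv_le k : damped_conv phi k <= sumZR (damped phi) * sumZR (damped phi).
Proof.
  unfold damped_conv. rewrite <- sumZR_scal.
  eapply Rle_trans; [apply Rle_abs|]. apply sumZR_abs_le; [|apply summableZR_scal, damped_summable].
  intros k1. rewrite Rabs_pos_eq by (apply Rmult_le_pos; apply damped_ge0).
  apply damped_product_le.
Qed.

Lemma damped_conv_summable :
  summableZR (damped_conv phi) /\
  sumZR (damped_conv phi) <= sumZR (damped phi) * sumZR (damped phi).
Proof.
  apply sumZR_bounded_boxes; [apply damped_conv_ge0|]. intros M. unfold boxsum, damped_conv.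
  destruct (zsum_sumZR (- Z.of_nat M) (2 * M + 1)
              (fun k k1 => damped phi k1 * damped phi (k - k1)%Z) damped_product_summable) as [S E].
  rewrite E, <- sumZR_scal.
  eapply Rle_trans; [apply Rle_abs|]. apply sumZR_abs_le; [|apply summableZR_scal, damped_summable].
  intros k1. rewrite zsum_scal, Rabs_pos_eq.
  - rewrite Rmult_comm. apply Rmult_le_compat_r; [apply damped_ge0|].
    apply shifted_box_le_sumZR; [apply damped_ge0|apply damped_summable].
  - apply Rmult_le_pos; [apply damped_ge0|apply zsum_ge0; intros; apply damped_ge0].
Qed.

Section Dominated.
Variables (psi : fcoef) (s t : R).
Hypothesis Hpsi : forall j, Cmod (psi j) <= Cmod (phi j).

Lemma Xts_summand_bound k k1 :
  Cmod (Xts_summand t s psi psi k k1) <= damped phi k1 * damped phi (k - k1)%Z.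
Proof.
  unfold Xts_summand. destruct (_ || _)%bool.
  { rewrite Cmod_0. apply Rmult_le_pos; apply damped_ge0. }
  rewrite Cdiv_RtoC, !Cmod_mult, Cmod_R. unfold damped.
  rewrite !Rinv_mult, !Rabs_mult, (Rabs_pos_eq (/ 6)) by lra.
  pose proof (Cmod_cis_sub_le (-3 * IZR k * IZR k1 * IZR (k - k1) * s)
                              (-3 * IZR k * IZR k1 * IZR (k - k1) * t)).
  set (u := Cmod (Cminus _ _)) in *.
  assert (0 <= u) by apply Cmod_ge_0.
  pose proof (Hpsi k1); pose proof (Hpsi (k - k1)%Z).
  pose proof (Cmod_ge_0 (psi k1)); pose proof (Cmod_ge_0 (psi (k - k1)%Z)).
  pose proof (Rabs_pos (/ IZR k1)); pose proof (Rabs_pos (/ IZR (k - k1))).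
  set (a := Cmod (psi k1)) in *. set (b := Cmod (psi (k - k1)%Z)) in *.
  set (x := Rabs (/ IZR k1)) in *. set (y := Rabs (/ IZR (k - k1))) in *.
  assert (a * b <= Cmod (phi k1) * Cmod (phi (k - k1)%Z)) by (apply Rmult_le_compat; auto).
  assert (0 <= x * y * (a * b)) by (apply Rmult_le_pos; apply Rmult_le_pos; auto).
  assert (u * (/ 6 * x * y) * (a * b) <= / 3 * (x * y * (a * b))) by nra.
  assert (x * y * (a * b) <= x * y * (Cmod (phi k1) * Cmod (phi (k - k1)%Z)))
    by (apply Rmult_le_compat_l; nra).
  replace (Cmod (phi k1) * x * (Cmod (phi (k - k1)%Z) * y))
    with (x * y * (Cmod (phi k1) * Cmod (phi (k - k1)%Z))) by ring.
  lra.
Qed.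

Lemma Xts_Cmod_le k : Cmod (Xts t s psi psi k) <= 2 * damped_conv phi k.
Proof.
  apply sumZ_Cmod_le; [apply Xts_summand_bound|apply damped_product_summable].
Qed.

End Dominated.
End DampedBounds.

(** * Passing to the limit along Fourier truncations *)

Lemma l2inner_cvg (F G : nat -> fcoef) (f g : fcoef) (B : Z -> R) :
  (forall k, C_cvg (fun N => F N k) (f k)) -> (forall k, C_cvg (fun N => G N k) (g k)) ->
  (forall N k, Cmod (F N k) * Cmod (G N k) <= B k) -> summableZR B ->
  C_cvg (fun N => l2inner (F N) (G N)) (l2inner f g).
Proof.
  intros HF HG HB HBs. apply C_cvg_mult; [apply C_cvg_const|].
  apply (sumZ_dominated_cvg _ _ B); auto.
  - intros k. apply C_cvg_mult; [|apply C_cvg_conj]; auto.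
  - intros N k. rewrite Cmod_mult, Cmod_conj. auto.
Qed.

(* Take [lam] so large that [c P / lam <= eps / 2], then [N] so large that
   [c lam e N < eps / 2]. *)
Lemma is_lim_seq_tradeoff (r e : nat -> R) (c P : R) :
  0 <= c -> 0 <= P -> is_lim_seq e 0 -> (forall N, 0 <= e N) -> (forall N, 0 <= r N) ->
  (forall N lam, 0 < lam -> r N <= c * (lam * e N + P / lam)) -> is_lim_seq r 0.
Proof.
  intros Hc HP He He0 Hr0 Hr. apply is_lim_seq_spec. intros [eps Heps]. simpl.
  set (lam := 2 * c * P / eps + 1).
  assert (Hlam : 0 < lam).
  { unfold lam. assert (0 <= 2 * c * P / eps) by (apply Rdiv_le_0_compat; nra). lra. }
  assert (Hd : 0 < eps / (2 * (c * lam + 1))) by (apply Rdiv_lt_0_compat; nra).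
  destruct (proj2 (is_lim_seq_spec _ _) He (mkposreal _ Hd)) as [N0 HN0].
  exists N0. intros N HN. specialize (HN0 N HN). simpl in HN0.
  rewrite Rminus_0_r, Rabs_pos_eq in HN0 |- * by auto.
  assert (A1 : c * P / lam <= eps / 2).
  { apply (Rmult_le_reg_r lam); auto. unfold Rdiv at 1.
    rewrite Rmult_assoc, Rinv_l, Rmult_1_r by lra.
    replace (eps / 2 * lam) with (c * P + eps / 2) by (unfold lam; field; lra). lra. }
  assert (A2 : c * lam * e N < eps / 2).
  { apply (Rle_lt_trans _ (c * lam * (eps / (2 * (c * lam + 1))))); [apply Rmult_le_compat_l; nra|].
    apply (Rmult_lt_reg_r (2 * (c * lam + 1))); [nra|]. field_simplify; nra. }
  specialize (Hr N lam Hlam).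
  replace (c * (lam * e N + P / lam)) with (c * lam * e N + c * P / lam) in Hr by (field; lra).
  lra.
Qed.

Lemma Cmod_trunc_le N f k : Cmod (trunc N f k) <= Cmod (f k).
Proof. unfold trunc. destruct (_ <=? _)%Z; [lra|rewrite Cmod_0; apply Cmod_ge_0]. Qed.

Lemma Cmod_sub_trunc_le N f k : Cmod (Cminus (f k) (trunc N f k)) <= Cmod (f k).
Proof.
  unfold trunc. destruct (_ <=? _)%Z.
  - replace (Cminus (f k) (f k)) with (RtoC 0) by ring. rewrite Cmod_0. apply Cmod_ge_0.
  - replace (Cminus (f k) (RtoC 0)) with (f k) by ring. lra.
Qed.

Lemma trunc_eventually f k : eventually (fun N => trunc N f k = f k).
Proof.
  exists (Z.to_nat (Z.abs k)). intros N HN. unfold trunc.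
  destruct (Z.leb_spec (Z.abs k) (Z.of_nat N)); auto. lia.
Qed.

Lemma trunc_vanishes_beyond N f : vanishes_beyondC N (trunc N f).
Proof. intros k Hk. unfold trunc. destruct (Z.leb_spec (Z.abs k) (Z.of_nat N)); auto. lia. Qed.

Lemma trunc_zero_mode N f : f 0%Z = RtoC 0 -> trunc N f 0%Z = RtoC 0.
Proof. intros H. unfold trunc. destruct (_ <=? _)%Z; auto. Qed.

Lemma trunc_real_valued N f : real_valued f -> real_valued (trunc N f).
Proof.
  intros H k. unfold trunc. rewrite Z.abs_opp. destruct (_ <=? _)%Z; [apply H|C_by_components].
Qed.

Lemma trunc_0_eq0 f k : f 0%Z = RtoC 0 -> trunc 0 f k = RtoC 0.
Proof.
  intros H. unfold trunc. destruct (Z.leb_spec (Z.abs k) (Z.of_nat 0)); auto.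
  replace k with 0%Z by lia. auto.
Qed.

Lemma X2ts_trig_zero t s p k : (forall j, p j = RtoC 0) -> X2ts_trig t s p p p k = RtoC 0.
Proof.
  intros Hp.
  assert (Xdot0 : forall sg q m, Xdot sg p q m = RtoC 0).
  { intros sg q m. rewrite (Xdot_finite 0) by (intros j _; apply Hp).
    rewrite zsumC_eq0; [ring|]. intros j _. unfold Xdot_summand.
    destruct (_ || _)%bool; auto. rewrite Hp. ring. }
  assert (Int0 : forall a b, RInt (V := C_R_CompleteNormedModule) (fun _ => RtoC 0) a b = RtoC 0).
  { intros a b. apply is_RInt_C_RInt, is_RInt_C_zero. }
  unfold X2ts_trig. rewrite (RInt_ext (V := C_R_CompleteNormedModule) _ (fun _ => RtoC 0)), Int0;
    [ring|].
  intros x _. rewrite (RInt_ext (V := C_R_CompleteNormedModule) _ (fun _ => RtoC 0)), Int0; auto.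
Qed.

Lemma trunc_cvg f k : C_cvg (fun N => trunc N f k) (f k).
Proof. apply C_cvg_eventually_eq, trunc_eventually. Qed.

Definition Xts_sq_majorant (phi : fcoef) (k : Z) : R :=
  4 * (sumZR (damped phi) * sumZR (damped phi)) * damped_conv phi k.

Section Approximation.
Variables (phi : fcoef) (s t : R).
Hypothesis Hl2 : in_l2 phi.

Lemma Xts_trunc_cvg k :
  C_cvg (fun N => Xts t s (trunc N phi) (trunc N phi) k) (Xts t s phi phi k).
Proof.
  apply (sumZ_dominated_cvg (fun N => Xts_summand t s (trunc N phi) (trunc N phi) k)
           (Xts_summand t s phi phi k) (fun k1 => damped phi k1 * damped phi (k - k1)%Z)).
  - intros k1. apply C_cvg_eventually_eq.
    destruct (trunc_eventually phi k1) as [N1 H1], (trunc_eventually phi (k - k1)) as [N2 H2].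
    exists (max N1 N2). intros N HN. unfold Xts_summand. rewrite H1, H2 by lia. auto.
  - intros N k1. apply Xts_summand_bound, Cmod_trunc_le.
  - apply damped_product_summable; auto.
Qed.

Lemma Cmod_Xts_trunc_sq_le N k :
  Cmod (Xts t s (trunc N phi) (trunc N phi) k) ^ 2
  <= Xts_sq_majorant phi k.
Proof.
  unfold Xts_sq_majorant.
  pose proof (Xts_Cmod_le phi Hl2 (trunc N phi) s t (Cmod_trunc_le N phi) k).
  pose proof (Cmod_ge_0 (Xts t s (trunc N phi) (trunc N phi) k)).
  pose proof (damped_conv_ge0 phi Hl2 k). pose proof (damped_conv_le phi Hl2 k).
  nra.
Qed.

Lemma summableZR_Xts_sq_majorant : summableZR (Xts_sq_majorant phi).
Proof. apply summableZR_scal, damped_conv_summable; auto. Qed.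

Lemma l2inner_Xts_trunc_cvg :
  C_cvg (fun N => l2inner (Xts t s (trunc N phi) (trunc N phi))
                          (Xts t s (trunc N phi) (trunc N phi)))
        (l2inner (Xts t s phi phi) (Xts t s phi phi)).
Proof.
  apply (l2inner_cvg _ _ _ _ (Xts_sq_majorant phi) Xts_trunc_cvg Xts_trunc_cvg);
    [|apply summableZR_Xts_sq_majorant].
  intros N k. pose proof (Cmod_Xts_trunc_sq_le N k). simpl in *. lra.
Qed.

Lemma l2inner_trunc_Xts_trunc_cvg :
  C_cvg (fun N => l2inner (trunc N phi) (Xts t s (trunc N phi) (trunc N phi)))
        (l2inner phi (Xts t s phi phi)).
Proof.
  apply (l2inner_cvg _ _ _ _ (fun k => Cmod (phi k) ^ 2 + Xts_sq_majorant phi k)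
           (trunc_cvg phi) Xts_trunc_cvg).
  - intros N k. eapply Rle_trans; [apply Rle_abs|]. eapply Rle_trans; [apply Rabs_mult_le_sq|].
    pose proof (Cmod_trunc_le N phi k). pose proof (Cmod_ge_0 (trunc N phi k)).
    pose proof (Cmod_Xts_trunc_sq_le N k). nra.
  - apply summableZR_plus; [exact Hl2|apply summableZR_Xts_sq_majorant].
Qed.

End Approximation.

Lemma amgm_weighted lam x y : 0 < lam -> x * y <= (lam * x ^ 2 + y ^ 2 / lam) / 2.
Proof.
  intros Hl. pose proof (pow2_ge_0 (lam * x - y)).
  apply (Rmult_le_reg_l (2 * lam)); [lra|].
  replace (2 * lam * ((lam * x ^ 2 + y ^ 2 / lam) / 2)) with (lam * lam * x ^ 2 + y ^ 2)
    by (field; lra).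
  nra.
Qed.

Lemma Cmod_sub_products_le (a a' b b' : C) lam : 0 < lam -> Cmod a' <= Cmod a ->
  Cmod (Cminus (Cmult a' (Cconj b')) (Cmult a (Cconj b)))
  <= lam / 2 * Cmod (Cminus a a') ^ 2 + / (2 * lam) * Cmod b ^ 2
     + (/ (2 * lam) * Cmod a ^ 2 + lam / 2 * Cmod (Cminus b' b) ^ 2).
Proof.
  intros Hl Ha.
  replace (Cminus (Cmult a' (Cconj b')) (Cmult a (Cconj b)))
    with (Cminus (Cmult a' (Cconj (Cminus b' b))) (Cmult (Cminus a a') (Cconj b)))
    by (rewrite Cminus_conj; ring).
  unfold Cminus at 1. eapply Rle_trans; [apply Cmod_triangle|].
  rewrite Cmod_opp, !Cmod_mult, !Cmod_conj.
  pose proof (amgm_weighted lam (Cmod (Cminus a a')) (Cmod b) Hl).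
  pose proof (amgm_weighted lam (Cmod (Cminus b' b)) (Cmod a) Hl).
  pose proof (Cmod_ge_0 (Cminus b' b)).
  assert (Cmod a' * Cmod (Cminus b' b) <= Cmod (Cminus b' b) * Cmod a) by nra.
  replace (/ (2 * lam)) with (/ lam * / 2) by (field; lra). unfold Rdiv in *. lra.
Qed.

Section X2Limit.
Variables (phi : fcoef) (s t : R) (Y : fcoef).
Hypotheses (Hphi : real_L2_0 phi)
  (HY : L2_converges (fun N => X2ts_trig t s (trunc N phi) (trunc N phi) (trunc N phi)) Y).

Notation X2N N := (X2ts_trig t s (trunc N phi) (trunc N phi) (trunc N phi)).

Lemma Y_in_l2 : in_l2 Y.
Proof.
  destruct HY as [H _]. specialize (H 0%nat). unfold in_l2 in *.
  eapply summableZR_le; [|exact H]. intros k. cbv beta.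
  rewrite X2ts_trig_zero by (intros; apply trunc_0_eq0, Hphi).
  replace (Cminus (RtoC 0) (Y k)) with (Copp (Y k)) by ring.
  rewrite Cmod_opp, Rabs_pos_eq by apply pow2_ge_0. lra.
Qed.

Lemma l2norm2_sub_trunc_cvg :
  is_lim_seq (fun N => l2norm2 (fun k => Cminus (phi k) (trunc N phi k))) 0.
Proof.
  assert (Z0 : sumZR (fun _ => 0) = 0).
  { rewrite (sumZR_finite 0), boxsum_0; auto. intros ? ?; auto. }
  rewrite <- Z0.
  apply (sumZR_dominated_cvg _ _ (fun k => Cmod (phi k) ^ 2)); [| |apply Hphi].
  - intros k. destruct (trunc_eventually phi k) as [N0 H0].
    apply (is_lim_seq_ext_loc (fun _ => 0)); [|apply is_lim_seq_const].
    exists N0. intros N HN. rewrite H0 by auto.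
    replace (Cminus (phi k) (phi k)) with (RtoC 0) by ring. rewrite Cmod_0. ring.
  - intros N k. rewrite Rabs_pos_eq by apply pow2_ge_0.
    apply pow_incr. split; [apply Cmod_ge_0|apply Cmod_sub_trunc_le].
Qed.

Lemma l2inner_trunc_X2_dist_le N lam : 0 < lam ->
  Cmod (Cminus (l2inner (trunc N phi) (X2N N)) (l2inner phi Y))
  <= 2 * PI * (lam * (l2norm2 (fun k => Cminus (phi k) (trunc N phi k))
                      + l2norm2 (fun k => Cminus (X2N N k) (Y k)))
               + (l2norm2 Y + l2norm2 phi) / lam).
Proof.
  intros Hl. destruct Hphi as [Hl2 _]. pose proof Y_in_l2 as HYl2.
  set (E k := Cmod (Cminus (phi k) (trunc N phi k)) ^ 2).
  set (F k := Cmod (Cminus (X2N N k) (Y k)) ^ 2).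
  assert (SE : summableZR E).
  { apply (summableZR_le _ (fun k => Cmod (phi k) ^ 2)); auto. intros k. unfold E.
    rewrite Rabs_pos_eq by apply pow2_ge_0.
    apply pow_incr. split; [apply Cmod_ge_0|apply Cmod_sub_trunc_le]. }
  assert (SF : summableZR F) by apply (proj1 HY N).
  set (h k := lam / 2 * E k + / (2 * lam) * Cmod (Y k) ^ 2
              + (/ (2 * lam) * Cmod (phi k) ^ 2 + lam / 2 * F k)).
  assert (Sh : summableZR h) by (repeat apply summableZR_plus; apply summableZR_scal; auto).
  assert (Eh : 2 * sumZR h = lam * (sumZR E + sumZR F) + (l2norm2 Y + l2norm2 phi) / lam).
  { unfold h.
    rewrite !sumZR_plus, !sumZR_scal by (repeat apply summableZR_plus; apply summableZR_scal; auto).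
    unfold l2norm2. field. lra. }
  unfold l2inner.
  replace (Cminus (Cmult (RtoC (2 * PI)) (sumZ (fun k => Cmult (trunc N phi k) (Cconj (X2N N k)))))
                  (Cmult (RtoC (2 * PI)) (sumZ (fun k => Cmult (phi k) (Cconj (Y k))))))
    with (Cmult (RtoC (2 * PI)) (Cminus (sumZ (fun k => Cmult (trunc N phi k) (Cconj (X2N N k))))
                                        (sumZ (fun k => Cmult (phi k) (Cconj (Y k)))))) by ring.
  rewrite <- sumZ_minus.
  - rewrite Cmod_mult, Cmod_R, Rabs_pos_eq by (pose proof PI_RGT_0; lra).
    apply Rmult_le_compat_l; [pose proof PI_RGT_0; lra|].
    change (l2norm2 (fun k => Cminus (phi k) (trunc N phi k))) with (sumZR E).
    change (l2norm2 (fun k => Cminus (X2N N k) (Y k))) with (sumZR F).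
    rewrite <- Eh. apply sumZ_Cmod_le; auto.
    intros k. apply Cmod_sub_products_le; auto. apply Cmod_trunc_le.
  - apply (summableZ_finite N). intros k Hk. rewrite (trunc_vanishes_beyond N phi k Hk). ring.
  - apply (summableZ_dominated _ (fun k => Cmod (phi k) ^ 2 + Cmod (Y k) ^ 2));
      [|apply summableZR_plus; auto].
    intros k. rewrite Cmod_mult, Cmod_conj. eapply Rle_trans; [apply Rle_abs|apply Rabs_mult_le_sq].
Qed.

Lemma l2inner_trunc_X2_cvg : C_cvg (fun N => l2inner (trunc N phi) (X2N N)) (l2inner phi Y).
Proof.
  apply C_cvg_of_Cmod_dist.
  apply (is_lim_seq_tradeoff _
           (fun N => l2norm2 (fun k => Cminus (phi k) (trunc N phi k))
                     + l2norm2 (fun k => Cminus (X2N N k) (Y k)))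
           (2 * PI) (l2norm2 Y + l2norm2 phi)).
  - pose proof PI_RGT_0; lra.
  - apply Rplus_le_le_0_compat; apply sumZR_ge0; try (intros; apply pow2_ge_0);
      [apply Y_in_l2|apply Hphi].
  - rewrite <- (Rplus_0_l 0). apply is_lim_seq_plus'; [apply l2norm2_sub_trunc_cvg|apply HY].
  - intros N. apply Rplus_le_le_0_compat; apply sumZR_ge0; try (intros; apply pow2_ge_0).
    + apply (summableZR_le _ (fun k => Cmod (phi k) ^ 2)); [|apply Hphi]. intros k.
      rewrite Rabs_pos_eq by apply pow2_ge_0.
      apply pow_incr. split; [apply Cmod_ge_0|apply Cmod_sub_trunc_le].
    + apply (proj1 HY N).
  - intros; apply Cmod_ge_0.
  - intros N lam Hl. apply l2inner_trunc_X2_dist_le; auto.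
Qed.

End X2Limit.

Theorem lemma3 (phi : fcoef) (s t : R) (Hphi : real_L2_0 phi) :
  l2inner phi (Xts t s phi phi) = RtoC 0 /\
  (forall Y : fcoef,
     L2_converges
       (fun N => X2ts_trig t s (trunc N phi) (trunc N phi) (trunc N phi)) Y ->
     Cplus (Cmult (RtoC 2) (l2inner phi Y))
           (l2inner (Xts t s phi phi) (Xts t s phi phi)) = RtoC 0).
Proof.
  destruct Hphi as [Hl2 [H0 Hr]].
  pose proof (fun N => trunc_vanishes_beyond N phi) as Hs.
  pose proof (fun N => trunc_zero_mode N phi H0) as Hs0.
  pose proof (fun N => trunc_real_valued N phi Hr) as Hsr.
  split.
  - apply (C_cvg_const_eq _ _ _ (fun N => l2inner_Xts_self_finite N _ t s (Hs N) (Hs0 N) (Hsr N))).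
    apply l2inner_trunc_Xts_trunc_cvg; auto.
  - intros Y HY.
    apply (C_cvg_const_eq _ _ _ (fun N => second_identity_finite N _ s t (Hs N) (Hs0 N) (Hsr N))).
    apply C_cvg_plus; [apply C_cvg_mult; [apply C_cvg_const|]|].
    + apply (l2inner_trunc_X2_cvg phi s t Y); [split; auto|auto].
    + apply l2inner_Xts_trunc_cvg; auto.
Qed.
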